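(* In the setting below, for every $t\in[0,T]$ the marginal distribution $p^{\star}_t$ at time $t$ of the CTMC with the optimal generator $Q^{\star}$ started from $p_{\lim}$ satisfies $$p^{\star}_t(x)\propto \exp(V_t(x)/\alpha)\,p^{\mathrm{pre}}_t(x),\qquad x\in\mathcal{X},$$ where $p^{\mathrm{pre}}_t$ is the time-$t$ marginal of the CTMC with generator $Q^{\mathrm{pre}}$ started from $p_{\lim}$. In particular (at $t=T$) $p^{\star}_T\propto\exp(r/\alpha)p^{\mathrm{pre}}_T$.
   Context: Setting: $\mathcal{X}$ is a finite set, $T>0$, $\alpha>0$, $r:\mathcal{X}\to\mathbb{R}$, and $Q^{\mathrm{pre}}(t)$ is a pretrained time-dependent CTMC generator. A CTMC generator is a family $Q(t)=(Q_{x,y}(t))$ with $Q_{x,y}(t)\ge0$ for $x\neq y$ (rate from $x$ to $y$) and $Q_{x,x}(t)=-\sum_{y\neq x}Q_{x,y}(t)$; marginals obey $\frac{dp_t(x)}{dt}=\sum_{y\neq x}Q_{y,x}(t)p_t(y)-\sum_{y\neq x}Q_{x,y}(t)p_t(x)$. The initial distribution $p_{\lim}$ is a Dirac mass at a fixed state. $P^{Q}$ is the path law of the CTMC with generator $Q$ started at $p_{\lim}$. $Q^{\star}$ is a maximizer over all generators (fully nonparametric class) of $$J(Q)=\mathbb{E}_{P^{Q}}[r(x_T)]-\alpha\,\mathbb{E}_{P^{Q}}\Big[\int_0^T\sum_{y\neq x_t}\Big\{Q^{\mathrm{pre}}_{x_t,y}(t)-Q_{x_t,y}(t)+Q_{x_t,y}(t)\log\frac{Q_{x_t,y}(t)}{Q^{\mathrm{pre}}_{x_t,y}(t)}\Big\}dt\Big].$$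 The optimal value function is $$V_t(x)=\mathbb{E}_{x_{t:T}\sim P^{Q^{\star}}}\Big[r(x_T)-\alpha\int_t^T\sum_{y\neq x_s}\Big\{Q^{\star}_{x_s,y}(s)-Q^{\mathrm{pre}}_{x_s,y}(s)+Q^{\star}_{x_s,y}(s)\log\frac{Q^{\star}_{x_s,y}(s)}{Q^{\mathrm{pre}}_{x_s,y}(s)}\Big\}ds\;\Big|\;x_t=x\Big].$$ Generators are assumed regular enough (e.g. continuous in $t$) that the Kolmogorov equations have unique solutions; $0\log(0/0)=0$. *)

From Stdlib Require Import Reals List.
From Coquelicot Require Import Coquelicot.
Open Scope R_scope.

Record finite_type := FiniteType {
  ft_car :> Type;
  ft_eq_dec : forall x y : ft_car, {x = y} + {x <> y};
  ft_enum : list ft_car;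
  ft_nodup : NoDup ft_enum;
  ft_full : forall x, In x ft_enum }.

Definition fsum {X : finite_type} (f : X -> R) : R :=
  fold_right (fun x acc => f x + acc) 0 (ft_enum X).

Definition offdiag_sum {X : finite_type} (x : X) (f : X -> R) : R :=
  fsum (fun y => if ft_eq_dec X y x then 0 else f y).

Definition dirac {X : finite_type} (x0 : X) : X -> R :=
  fun x => if ft_eq_dec X x x0 then 1 else 0.

(** time-dependent CTMC generator: Q t x y = rate from x to y at time t *)
Definition is_generator {X : finite_type} (Q : R -> X -> X -> R) : Prop :=
  (forall t (x y : X), x <> y -> 0 <= Q t x y) /\
  (forall t (x : X), Q t x x = - offdiag_sum x (Q t x)).

Definition cont_on (a b : R) (f : R -> R) : Prop :=
  forall t, a <= t <= b ->
    filterlim f (within (fun s => a <= s <= b) (locally t)) (locally (f t)).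

Definition regular_generator {X : finite_type} (T : R) (Q : R -> X -> X -> R) : Prop :=
  is_generator Q /\ (forall x y : X, cont_on 0 T (fun t => Q t x y)).

Definition kolmogorov_forward {X : finite_type} (Q : R -> X -> X -> R)
    (s T : R) (p0 : X -> R) (p : R -> X -> R) : Prop :=
  (forall x, p s x = p0 x) /\
  (forall x, cont_on s T (fun t => p t x)) /\
  (forall t x, s < t < T ->
     is_derive (fun u => p u x) t
       (offdiag_sum x (fun y => Q t y x * p t y)
        - offdiag_sum x (fun y => Q t x y) * p t x)).

Definition xlogxy (a b : R) : R :=
  if Req_EM_T a 0 then 0 else a * ln (a / b).

Definition kl_rate {X : finite_type} (Qpre Q : R -> X -> X -> R) (t : R) (x : X) : R :=
  offdiag_sum x (fun y => Qpre t x y - Q t x y + xlogxy (Q t x y) (Qpre t x y)).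

(** admissible generators: regular, and absolutely continuous w.r.t. Qpre
    (Q_{x,y}(t) = 0 whenever Qpre_{x,y}(t) = 0); otherwise the KL term is +oo. *)
Definition admissible {X : finite_type} (T : R) (Qpre Q : R -> X -> X -> R) : Prop :=
  regular_generator T Q /\
  (forall t (x y : X), 0 <= t <= T -> x <> y -> Qpre t x y = 0 -> Q t x y = 0).

Definition exp_kl {X : finite_type} (Qpre Q : R -> X -> X -> R) (p : R -> X -> R) (t : R) : R :=
  fsum (fun x => p t x * kl_rate Qpre Q t x).

Definition finite_cost {X : finite_type} (T : R) (Qpre Q : R -> X -> X -> R)
    (p : R -> X -> R) : Prop :=
  ex_RInt (exp_kl Qpre Q p) 0 T.

Definition objective {X : finite_type} (T alpha : R) (r : X -> R)
    (Qpre Q : R -> X -> X -> R) (p : R -> X -> R) : R :=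
  fsum (fun x => p T x * r x) - alpha * RInt (exp_kl Qpre Q p) 0 T.

(** V_t(x), where K t x s z = P(x_s = z | x_t = x) under Q* (s in [t,T]) *)
Definition value_fn {X : finite_type} (T alpha : R) (r : X -> R)
    (Qpre Qs : R -> X -> X -> R) (K : R -> X -> R -> X -> R) (t : R) (x : X) : R :=
  fsum (fun z => K t x T z * r z)
  - alpha * RInt (exp_kl Qpre Qs (K t x)) t T.

(* The optimal generator is Doob's h-transform [Qh_xy = Qpre_xy h_y / h_x] of the
   pretrained generator, where [h] solves the backward Kolmogorov equation of [Qpre] with
   terminal value [exp (r / alpha)] (and is positive).  Differentiating
   [sum_x p_t(x) log h_t(x)] along the marginals of any admissible [Q] shows that its
   objective equals [alpha log h_0(x0)] minus [alpha] times its expected KL cost relative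
   to [Qh].  Hence [Qh] is optimal, so the KL cost of [Q*] relative to [Qh] vanishes; as
   this cost dominates a Hellinger distance, [Q*] agrees with [Qh] on every state charged
   by [p*].  Thus [p*] solves the forward equation of [Qh], whose solution is
   [p^pre_t h_t / h_0(x0)], and the same identity started at [(t, x)] gives
   [V_t = alpha log h_t]. *)

From Stdlib Require Import Reals List Lra Lia Psatz.
From Coquelicot Require Import Coquelicot.
Open Scope R_scope.

Definition lsum {A : Type} (l : list A) (f : A -> R) : R :=
  fold_right (fun x acc => f x + acc) 0 l.

Lemma lsum_ext {A : Type} (l : list A) (f g : A -> R) :
  (forall x, In x l -> f x = g x) -> lsum l f = lsum l g.
Proof.
  induction l as [|a l IH]; simpl; intros H; auto.
  rewrite (H a (or_introl eq_refl)), IH; auto.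
Qed.

Lemma lsum_plus {A : Type} (l : list A) (f g : A -> R) :
  lsum l (fun x => f x + g x) = lsum l f + lsum l g.
Proof. induction l; simpl; [lra|]. rewrite IHl; lra. Qed.

Lemma lsum_scal {A : Type} (l : list A) c (f : A -> R) :
  lsum l (fun x => c * f x) = c * lsum l f.
Proof. induction l; simpl; [lra|]. rewrite IHl; lra. Qed.

Lemma lsum_le {A : Type} (l : list A) (f g : A -> R) :
  (forall x, f x <= g x) -> lsum l f <= lsum l g.
Proof. intros H; induction l; simpl; [lra|]. specialize (H a); lra. Qed.

Lemma lsum_swap {A B : Type} (l : list A) (m : list B) (F : A -> B -> R) :
  lsum l (fun x => lsum m (F x)) = lsum m (fun y => lsum l (fun x => F x y)).
Proof.
  induction l as [|a l IH]; simpl.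
  - induction m; simpl; auto; lra.
  - rewrite IH, <- lsum_plus. reflexivity.
Qed.

Lemma lsum_split {A : Type} (dec : forall x y : A, {x = y} + {x <> y})
    (l : list A) (x : A) (f : A -> R) :
  NoDup l -> In x l ->
  lsum l f = f x + lsum l (fun y => if dec y x then 0 else f y).
Proof.
  induction l as [|a l IH]; simpl; intros Hnd Hin; [contradiction|].
  inversion Hnd as [|? ? Ha Hl]; subst.
  destruct (dec a x) as [->|ne].
  - rewrite Rplus_0_l. f_equal. apply lsum_ext. intros y Hy.
    destruct (dec y x); [subst; contradiction|]; auto.
  - destruct Hin as [e|Hin]; [congruence|]. rewrite (IH Hl Hin). lra.
Qed.

Section FiniteSums.
Context {X : finite_type}.

Lemma fsum_ext (f g : X -> R) : (forall x, f x = g x) -> fsum f = fsum g.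
Proof. intros H; apply lsum_ext; auto. Qed.

Lemma fsum_plus (f g : X -> R) : fsum (fun x => f x + g x) = fsum f + fsum g.
Proof. apply lsum_plus. Qed.

Lemma fsum_scal c (f : X -> R) : fsum (fun x => c * f x) = c * fsum f.
Proof. apply lsum_scal. Qed.

Lemma fsum_opp (f : X -> R) : fsum (fun x => - f x) = - fsum f.
Proof.
  rewrite (fsum_ext _ (fun x => -1 * f x)) by (intros; ring).
  rewrite fsum_scal; ring.
Qed.

Lemma fsum_minus (f g : X -> R) : fsum (fun x => f x - g x) = fsum f - fsum g.
Proof. unfold Rminus. rewrite fsum_plus, fsum_opp. reflexivity. Qed.

Lemma fsum_zero : fsum (fun _ : X => 0) = 0.
Proof. unfold fsum; induction (ft_enum X); simpl; lra. Qed.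

Lemma fsum_const c : fsum (fun _ : X => c) = c * fsum (fun _ : X => 1).
Proof. rewrite <- fsum_scal. apply fsum_ext; intros; ring. Qed.

Lemma fsum_le (f g : X -> R) : (forall x, f x <= g x) -> fsum f <= fsum g.
Proof. apply lsum_le. Qed.

Lemma fsum_nonneg (f : X -> R) : (forall x, 0 <= f x) -> 0 <= fsum f.
Proof. intros H. rewrite <- fsum_zero. apply fsum_le; auto. Qed.

Lemma fsum_abs (f : X -> R) : Rabs (fsum f) <= fsum (fun x => Rabs (f x)).
Proof.
  unfold fsum; induction (ft_enum X); simpl; [rewrite Rabs_R0; lra|].
  eapply Rle_trans; [apply Rabs_triang | lra].
Qed.

Lemma fsum_swap {Y : finite_type} (F : X -> Y -> R) :
  fsum (fun x => fsum (F x)) = fsum (fun y => fsum (fun x => F x y)).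
Proof. apply lsum_swap. Qed.

Lemma fsum_split (x : X) (f : X -> R) : fsum f = f x + offdiag_sum x f.
Proof. apply lsum_split; [apply ft_nodup | apply ft_full]. Qed.

Lemma offdiag_ext (x : X) (f g : X -> R) :
  (forall y, y <> x -> f y = g y) -> offdiag_sum x f = offdiag_sum x g.
Proof.
  intros H; unfold offdiag_sum; apply fsum_ext; intros y.
  destruct (ft_eq_dec X y x); auto.
Qed.

Lemma offdiag_plus (x : X) (f g : X -> R) :
  offdiag_sum x (fun y => f y + g y) = offdiag_sum x f + offdiag_sum x g.
Proof.
  unfold offdiag_sum. rewrite <- fsum_plus. apply fsum_ext; intros y.
  destruct (ft_eq_dec X y x); lra.
Qed.

Lemma offdiag_scal (x : X) c (f : X -> R) :
  offdiag_sum x (fun y => c * f y) = c * offdiag_sum x f.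
Proof.
  unfold offdiag_sum. rewrite <- fsum_scal. apply fsum_ext; intros y.
  destruct (ft_eq_dec X y x); lra.
Qed.

Lemma offdiag_minus (x : X) (f g : X -> R) :
  offdiag_sum x (fun y => f y - g y) = offdiag_sum x f - offdiag_sum x g.
Proof.
  unfold offdiag_sum. rewrite <- fsum_minus. apply fsum_ext; intros y.
  destruct (ft_eq_dec X y x); lra.
Qed.

Lemma offdiag_zero (x : X) : offdiag_sum x (fun _ => 0) = 0.
Proof.
  unfold offdiag_sum. rewrite (fsum_ext _ (fun _ => 0)); [apply fsum_zero|].
  intros y. destruct (ft_eq_dec X y x); lra.
Qed.

Lemma offdiag_nonneg (x : X) (f : X -> R) :
  (forall y, y <> x -> 0 <= f y) -> 0 <= offdiag_sum x f.
Proof.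
  intros H; unfold offdiag_sum; apply fsum_nonneg; intros y.
  destruct (ft_eq_dec X y x); [lra|auto].
Qed.

Lemma fsum_ge_term (f : X -> R) x : (forall y, 0 <= f y) -> f x <= fsum f.
Proof.
  intros H. rewrite (fsum_split x).
  assert (0 <= offdiag_sum x f) by (apply offdiag_nonneg; auto). lra.
Qed.

Lemma offdiag_ge_term (x : X) (f : X -> R) y :
  y <> x -> (forall z, z <> x -> 0 <= f z) -> f y <= offdiag_sum x f.
Proof.
  intros Hy H. unfold offdiag_sum.
  replace (f y) with ((fun z => if ft_eq_dec X z x then 0 else f z) y)
    by (destruct (ft_eq_dec X y x); congruence).
  apply (fsum_ge_term (fun z => if ft_eq_dec X z x then 0 else f z)). intros z. destruct (ft_eq_dec X z x); [lra|auto].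
Qed.

Lemma fsum_dirac_l (x0 : X) (f : X -> R) : fsum (fun x => dirac x0 x * f x) = f x0.
Proof.
  rewrite (fsum_split x0), (offdiag_ext x0 _ (fun _ => 0)), offdiag_zero.
  - unfold dirac. destruct (ft_eq_dec X x0 x0); [lra|congruence].
  - intros y Hy. unfold dirac. destruct (ft_eq_dec X y x0); [congruence|lra].
Qed.

Lemma fsum_dirac_r (z : X) (f : X -> R) : fsum (fun y => f y * dirac y z) = f z.
Proof.
  rewrite (fsum_split z), (offdiag_ext z _ (fun _ => 0)), offdiag_zero.
  - unfold dirac. destruct (ft_eq_dec X z z); [lra|congruence].
  - intros y Hy. unfold dirac. destruct (ft_eq_dec X z y); [congruence|lra].
Qed.

Lemma fsum_mul_bound (b v : X -> R) M :
  (forall y, Rabs (b y) <= M) ->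
  Rabs (fsum (fun y => b y * v y)) <= M * fsum (fun y => Rabs (v y)).
Proof.
  intros H. eapply Rle_trans; [apply fsum_abs|]. rewrite <- fsum_scal. apply fsum_le.
  intros y. rewrite Rabs_mult. apply Rmult_le_compat_r; [apply Rabs_pos | auto].
Qed.

Lemma fsum_abs_bound (v : X -> R) K :
  (forall y, Rabs (v y) <= K) -> fsum (fun y => Rabs (v y)) <= K * fsum (fun _ : X => 1).
Proof. intros H. rewrite <- fsum_const. apply fsum_le; auto. Qed.

End FiniteSums.

Definition clamp (a b t : R) : R := Rmax a (Rmin b t).

Lemma clamp_in a b t : a <= b -> a <= clamp a b t <= b.
Proof. intros. unfold clamp, Rmax, Rmin. repeat destruct Rle_dec; lra. Qed.

Lemma clamp_id a b t : a <= t <= b -> clamp a b t = t.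
Proof. intros. unfold clamp, Rmax, Rmin. repeat destruct Rle_dec; lra. Qed.

Lemma continuous_clamp a b t : a <= b -> continuous (clamp a b) t.
Proof.
  intros Hab. apply filterlim_locally. intros eps. exists eps. intros s Hs.
  change (Rabs (clamp a b s - clamp a b t) < eps).
  change (Rabs (s - t) < eps) in Hs.
  eapply Rle_lt_trans; [|exact Hs].
  unfold clamp, Rmax, Rmin. repeat destruct Rle_dec; unfold Rabs; repeat destruct Rcase_abs; lra.
Qed.

(* [cont_on a b f] only constrains [f] on [a,b]; composing with [clamp a b] turns
   it into genuine continuity on all of [R], where Coquelicot's calculus applies. *)
Lemma cont_on_clamp a b f t : a <= b -> cont_on a b f ->
  continuous (fun s => f (clamp a b s)) t.
Proof.
  intros Hab Hc.
  apply filterlim_comp with (G := within (fun s => a <= s <= b) (locally (clamp a b t))).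
  - intros P HP. pose proof (continuous_clamp a b t Hab _ HP) as Hcl.
    unfold filtermap in *. eapply filter_imp; [|exact Hcl].
    intros s Hs. apply Hs, clamp_in; auto.
  - apply Hc, clamp_in; auto.
Qed.

Lemma cont_on_of_continuous a b f g :
  (forall t, a <= t <= b -> f t = g t) ->
  (forall t, a <= t <= b -> continuous g t) -> cont_on a b f.
Proof.
  intros E Hg t Ht. rewrite (E t Ht). intros P HP.
  specialize (Hg t Ht _ HP). unfold filtermap, within in *.
  eapply filter_imp; [|exact Hg]. intros s Hs Hd. rewrite E; auto.
Qed.

Lemma cont_on_ext a b f g :
  (forall t, a <= t <= b -> f t = g t) -> cont_on a b f -> cont_on a b g.
Proof.
  intros E Hf t Ht P HP. rewrite <- E in HP by auto.
  specialize (Hf t Ht P HP). unfold filtermap, within in *.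
  eapply filter_imp; [|exact Hf]. intros s Hs Hd. rewrite <- E; auto.
Qed.

Lemma cont_on_sub a b c d f : a <= c -> d <= b -> cont_on a b f -> cont_on c d f.
Proof.
  intros H1 H2 Hf t Ht P HP.
  specialize (Hf t ltac:(lra) P HP). unfold filtermap, within in *.
  eapply filter_imp; [|exact Hf]. intros s Hs Hd. apply Hs; lra.
Qed.

Lemma cont_on_const a b c : cont_on a b (fun _ => c).
Proof. intros t _. apply filterlim_const. Qed.

Lemma cont_on_id a b : cont_on a b (fun t => t).
Proof. apply cont_on_of_continuous with (g := fun t => t); auto. intros; apply continuous_id. Qed.

Lemma cont_on_plus a b f g : a <= b -> cont_on a b f -> cont_on a b g ->
  cont_on a b (fun t => f t + g t).
Proof.
  intros Hab Hf Hg.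
  apply cont_on_of_continuous with (g := fun t => f (clamp a b t) + g (clamp a b t)).
  - intros t Ht; rewrite clamp_id; auto.
  - intros t _.
    apply (continuous_plus (fun s => f (clamp a b s)) (fun s => g (clamp a b s)));
      apply cont_on_clamp; auto.
Qed.

Lemma cont_on_mult a b f g : a <= b -> cont_on a b f -> cont_on a b g ->
  cont_on a b (fun t => f t * g t).
Proof.
  intros Hab Hf Hg.
  apply cont_on_of_continuous with (g := fun t => f (clamp a b t) * g (clamp a b t)).
  - intros t Ht; rewrite clamp_id; auto.
  - intros t _.
    apply (continuous_mult (fun s => f (clamp a b s)) (fun s => g (clamp a b s)));
      apply cont_on_clamp; auto.
Qed.

Lemma cont_on_comp a b f g : a <= b -> cont_on a b f ->
  (forall t, a <= t <= b -> continuous g (f t)) -> cont_on a b (fun t => g (f t)).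
Proof.
  intros Hab Hf Hg.
  apply cont_on_of_continuous with (g := fun t => g (f (clamp a b t))).
  - intros t Ht; rewrite clamp_id; auto.
  - intros t Ht. apply (continuous_comp (fun s => f (clamp a b s)) g).
    + apply cont_on_clamp; auto.
    + rewrite clamp_id; auto.
Qed.

Lemma cont_on_opp a b f : a <= b -> cont_on a b f -> cont_on a b (fun t => - f t).
Proof.
  intros Hab Hf. apply (cont_on_comp a b f Ropp); auto.
  intros t _. apply (continuous_opp (fun x : R => x)), continuous_id.
Qed.

Lemma cont_on_minus a b f g : a <= b -> cont_on a b f -> cont_on a b g ->
  cont_on a b (fun t => f t - g t).
Proof. intros. apply cont_on_plus, cont_on_opp; auto. Qed.

Lemma cont_on_inv a b f : a <= b -> cont_on a b f ->
  (forall t, a <= t <= b -> f t <> 0) -> cont_on a b (fun t => / f t).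
Proof.
  intros Hab Hf Hn. apply (cont_on_comp a b f Rinv); auto.
  intros t Ht. apply (continuous_Rinv_comp (fun x => x)); [apply continuous_id | auto].
Qed.

Lemma cont_on_ln a b f : a <= b -> cont_on a b f ->
  (forall t, a <= t <= b -> 0 < f t) -> cont_on a b (fun t => ln (f t)).
Proof. intros Hab Hf Hn. apply (cont_on_comp a b f ln); auto. intros; apply continuous_ln; auto. Qed.

Lemma cont_on_sqrt a b f : a <= b -> cont_on a b f -> cont_on a b (fun t => sqrt (f t)).
Proof. intros Hab Hf. apply (cont_on_comp a b f sqrt); auto. intros; apply continuous_sqrt. Qed.

Lemma cont_on_exp a b f : a <= b -> cont_on a b f -> cont_on a b (fun t => exp (f t)).
Proof. intros Hab Hf. apply (cont_on_comp a b f exp); auto. intros; apply continuous_exp. Qed.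

Lemma cont_on_exp_lin a b c : a <= b -> cont_on a b (fun t => exp (c * t)).
Proof. intros. apply cont_on_exp, cont_on_mult, cont_on_id; auto using cont_on_const. Qed.

Lemma cont_on_fsum {X : finite_type} a b (F : R -> X -> R) : a <= b ->
  (forall x, cont_on a b (fun t => F t x)) -> cont_on a b (fun t => fsum (F t)).
Proof.
  intros Hab H. unfold fsum. induction (ft_enum X); simpl.
  - apply cont_on_const.
  - apply cont_on_plus; auto.
Qed.

Lemma cont_on_offdiag {X : finite_type} a b (x : X) (F : R -> X -> R) : a <= b ->
  (forall y, y <> x -> cont_on a b (fun t => F t y)) ->
  cont_on a b (fun t => offdiag_sum x (F t)).
Proof.
  intros Hab H. apply cont_on_fsum; auto.
  intros y. destruct (ft_eq_dec X y x); [apply cont_on_const | auto].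
Qed.

Lemma cont_on_reflect T f : 0 <= T -> cont_on 0 T f -> cont_on 0 T (fun t => f (T - t)).
Proof.
  intros HT Hf.
  apply cont_on_of_continuous with (g := fun t => f (clamp 0 T (T - t))).
  - intros t Ht. rewrite clamp_id; auto; lra.
  - intros t _. apply (continuous_comp (fun t => T - t) (fun s => f (clamp 0 T s))).
    + apply (continuous_minus (fun _ => T) (fun t => t)); [apply continuous_const | apply continuous_id].
    + apply cont_on_clamp; auto.
Qed.

Lemma is_derive_fsum {X : finite_type} (F : R -> X -> R) dF t :
  (forall x, is_derive (fun u => F u x) t (dF x)) ->
  is_derive (fun u => fsum (F u)) t (fsum dF).
Proof.
  intros H. unfold fsum. induction (ft_enum X); simpl.
  - apply (is_derive_const 0).
  - apply (is_derive_plus (fun u => F u a)); auto.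
Qed.

Lemma is_derive_ln_comp (f : R -> R) t df : 0 < f t -> is_derive f t df ->
  is_derive (fun s => ln (f s)) t (df * / f t).
Proof.
  intros Hp Hd. apply (is_derive_comp ln f t); auto.
  apply is_derive_Reals, derivable_pt_lim_ln; auto.
Qed.

Lemma is_derive_clamp a b (f : R -> R) t l : a < t < b -> is_derive f t l ->
  is_derive (fun s => f (clamp a b s)) t l.
Proof.
  intros Ht Hd. apply is_derive_ext_loc with (f := f); auto.
  assert (Hp : 0 < Rmin (t - a) (b - t)) by (apply Rmin_pos; lra).
  exists (mkposreal _ Hp). intros s Hs. change (Rabs (s - t) < Rmin (t - a) (b - t)) in Hs.
  pose proof (Rmin_l (t - a) (b - t)); pose proof (Rmin_r (t - a) (b - t)).
  rewrite (clamp_id a b s); [reflexivity|]. unfold Rabs in Hs; destruct Rcase_abs in Hs; lra.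
Qed.

Lemma derive_nonpos_le a b (f df : R -> R) : a <= b -> cont_on a b f ->
  (forall t, a < t < b -> is_derive f t (df t)) ->
  (forall t, a <= t <= b -> df t <= 0) -> f b <= f a.
Proof.
  intros Hab Hf Hd Hneg.
  destruct (MVT_gen (fun s => f (clamp a b s)) a b df) as [c [Hc E]].
  - intros x Hx. rewrite Rmin_left, Rmax_right in Hx by lra. apply is_derive_clamp; auto.
  - intros x Hx. apply continuity_pt_filterlim, cont_on_clamp; auto.
  - rewrite Rmin_left, Rmax_right in Hc by lra.
    rewrite !clamp_id in E by lra. specialize (Hneg c Hc).
    assert (df c * (b - a) <= 0) by nra. lra.
Qed.

Lemma derive_zero_eq a b (f : R -> R) : a <= b -> cont_on a b f ->
  (forall t, a < t < b -> is_derive f t 0) -> f b = f a.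
Proof.
  intros Hab Hf Hd. apply Rle_antisym.
  - apply (derive_nonpos_le a b f (fun _ => 0)); auto; intros; lra.
  - enough (- f b <= - f a) by lra.
    apply (derive_nonpos_le a b (fun t => - f t) (fun _ => 0)); auto.
    + apply cont_on_opp; auto.
    + intros t Ht. rewrite <- Ropp_0. apply (is_derive_opp f); auto.
    + intros; lra.
Qed.

Lemma ex_RInt_cont_on a b (g : R -> R) : a <= b -> cont_on a b g -> ex_RInt g a b.
Proof.
  intros Hab Hg. apply ex_RInt_ext with (f := fun s => g (clamp a b s)).
  - intros x Hx. rewrite Rmin_left, Rmax_right in Hx by lra. rewrite clamp_id; auto; lra.
  - apply (@ex_RInt_continuous R_CompleteNormedModule). intros; apply cont_on_clamp; auto.
Qed.

Lemma RInt_continuous_derive (f : R -> R) : (forall t, continuous f t) ->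
  forall a t, is_derive (fun s => RInt f a s) t (f t).
Proof.
  intros Hf a t. apply (is_derive_RInt f (fun s => RInt f a s) a t); auto.
  apply filter_forall. intros z.
  apply (RInt_correct (V := R_CompleteNormedModule)), (@ex_RInt_continuous R_CompleteNormedModule).
  auto.
Qed.

Lemma RInt_continuous_continuous (f : R -> R) : (forall t, continuous f t) ->
  forall a t, continuous (fun s => RInt f a s) t.
Proof.
  intros Hf a t. apply (@ex_derive_continuous R_AbsRing R_NormedModule).
  eexists; apply RInt_continuous_derive; auto.
Qed.

Lemma RInt_of_derive a b (g G : R -> R) : a <= b -> cont_on a b g -> cont_on a b G ->
  (forall t, a < t < b -> is_derive G t (g t)) -> RInt g a b = G b - G a.
Proof.
  intros Hab Hg HG Hd.
  set (gc := fun s => g (clamp a b s)).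
  assert (Hgc : forall t, continuous gc t) by (intros; apply cont_on_clamp; auto).
  set (Phi := fun t => RInt gc a t).
  assert (E : RInt g a b = Phi b).
  { apply RInt_ext. intros x Hx. rewrite Rmin_left, Rmax_right in Hx by lra.
    unfold gc. rewrite clamp_id; auto; lra. }
  assert (HP0 : Phi a = 0) by (unfold Phi; rewrite RInt_point; reflexivity).
  enough (C : G b - Phi b = G a - Phi a) by lra.
  apply (derive_zero_eq a b (fun t => G t - Phi t)); auto.
  - apply cont_on_minus; auto. apply cont_on_of_continuous with (g := Phi); auto.
    intros; apply RInt_continuous_continuous; auto.
  - intros t Ht. replace 0 with (g t - gc t) by (unfold gc; rewrite clamp_id; lra).
    apply (is_derive_minus G Phi); auto. apply RInt_continuous_derive; auto.
Qed.

Lemma RInt_exp_lin lam t : 0 < lam ->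
  RInt (fun s => exp (lam * s)) 0 t = (exp (lam * t) - 1) / lam :> R.
Proof.
  intros Hl.
  assert (H : forall a b, a <= b ->
    RInt (fun s => exp (lam * s)) a b = exp (lam * b) / lam - exp (lam * a) / lam).
  { intros a b Hab.
    apply (RInt_of_derive a b (fun s => exp (lam * s)) (fun s => exp (lam * s) / lam));
      auto using cont_on_exp_lin.
    - apply cont_on_mult, cont_on_const; auto using cont_on_exp_lin.
    - intros s _. auto_derive; auto. field. lra. }
  destruct (Rle_dec 0 t).
  - rewrite H by auto. rewrite Rmult_0_r, exp_0. field. lra.
  - rewrite <- opp_RInt_swap.
    + rewrite H by lra. rewrite Rmult_0_r, exp_0.
      change (- (1 / lam - exp (lam * t) / lam) = (exp (lam * t) - 1) / lam). field. lra.
    + apply ex_RInt_cont_on; [lra | apply cont_on_exp_lin; lra].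
Qed.

Lemma RInt_nonneg a b f : a <= b -> ex_RInt f a b ->
  (forall t, a <= t <= b -> 0 <= f t) -> 0 <= RInt f a b.
Proof.
  intros Hab Hf H.
  assert (L : RInt (fun _ => 0) a b <= RInt f a b).
  { apply RInt_le; auto. apply ex_RInt_const. intros; apply H; lra. }
  rewrite RInt_const in L. change (scal (b - a) 0) with ((b - a) * 0) in L. lra.
Qed.

Lemma RInt_abs_le (f K : R -> R) a b : a <= b -> ex_RInt f a b -> ex_RInt K a b ->
  (forall s, a <= s <= b -> Rabs (f s) <= K s) -> Rabs (RInt f a b) <= RInt K a b.
Proof.
  intros Hab Hf HK H.
  destruct (Rle_lt_or_eq_dec a b Hab) as [Hlt| ->].
  - assert (Hab' : forall x, a < x < b -> - K x <= f x <= K x).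
    { intros x Hx. specialize (H x ltac:(lra)). unfold Rabs in H; destruct Rcase_abs in H; lra. }
    assert (L1 : RInt f a b <= RInt K a b) by (apply RInt_le; auto; intros x Hx; apply Hab'; auto).
    assert (L2 : RInt (fun x => - K x) a b <= RInt f a b).
    { apply RInt_le; auto; [apply (ex_RInt_opp K); auto | intros x Hx; apply Hab'; auto]. }
    rewrite (RInt_opp K) in L2 by auto. change (opp (RInt K a b)) with (- RInt K a b) in L2.
    unfold Rabs; destruct Rcase_abs; lra.
  - rewrite !RInt_point. change (Rabs 0 <= 0). rewrite Rabs_R0; lra.
Qed.

(* The integrand exceeds [f t0 / 2] on a neighbourhood of [t0]. *)
Lemma RInt_pos_of_pos_point a b f t0 : a < b -> cont_on a b f ->
  (forall t, a <= t <= b -> 0 <= f t) -> a <= t0 <= b -> 0 < f t0 -> 0 < RInt f a b.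
Proof.
  intros Hab Hf Hpos Ht0 Hf0.
  assert (He : 0 < f t0 / 2) by lra.
  destruct (Hf t0 Ht0 (ball (f t0) (mkposreal _ He)) (locally_ball _ _)) as [d Hd].
  pose proof (cond_pos d) as Hdp.
  set (c1 := Rmax a (t0 - d / 2)). set (d1 := Rmin b (t0 + d / 2)).
  assert (Hc1 : a <= c1 <= t0) by (unfold c1, Rmax; destruct Rle_dec; lra).
  assert (Hd1 : t0 <= d1 <= b) by (unfold d1, Rmin; destruct Rle_dec; lra).
  assert (Hcd : c1 < d1) by (unfold c1, d1, Rmax, Rmin; repeat destruct Rle_dec; lra).
  assert (Hin : forall s, c1 < s < d1 -> f t0 / 2 < f s).
  { intros s Hs.
    assert (Hs1 : t0 - d/2 < s < t0 + d/2).
    { split; [eapply Rle_lt_trans; [apply Rmax_r | apply Hs]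
             | eapply Rlt_le_trans; [apply Hs | apply Rmin_r]]. }
    assert (B : ball t0 d s) by (change (Rabs (s - t0) < d); unfold Rabs; destruct Rcase_abs; lra).
    specialize (Hd s B ltac:(lra)). change (Rabs (f s - f t0) < f t0 / 2) in Hd.
    unfold Rabs in Hd; destruct Rcase_abs in Hd; lra. }
  assert (Ex : forall u v, a <= u -> u <= v -> v <= b -> ex_RInt f u v).
  { intros u v H1 H2 H3. apply ex_RInt_cont_on; auto. apply (cont_on_sub a b); auto. }
  assert (E : RInt f a b = RInt f a c1 + RInt f c1 d1 + RInt f d1 b).
  { rewrite <- (RInt_Chasles f a c1 b), <- (RInt_Chasles f c1 d1 b) by (apply Ex; lra).
    change (RInt f a c1 + (RInt f c1 d1 + RInt f d1 b) = RInt f a c1 + RInt f c1 d1 + RInt f d1 b).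
    ring. }
  assert (0 <= RInt f a c1) by (apply RInt_nonneg; [lra | apply Ex; lra | intros; apply Hpos; lra]).
  assert (0 <= RInt f d1 b) by (apply RInt_nonneg; [lra | apply Ex; lra | intros; apply Hpos; lra]).
  assert (Mid : RInt (fun _ => f t0 / 2) c1 d1 <= RInt f c1 d1).
  { apply RInt_le; try lra; [apply ex_RInt_const | apply Ex; lra |].
    intros s Hs. left; apply Hin; auto. }
  rewrite RInt_const in Mid. change (scal (d1 - c1) (f t0 / 2)) with ((d1 - c1) * (f t0 / 2)) in Mid.
  assert (0 < (d1 - c1) * (f t0 / 2)) by (apply Rmult_lt_0_compat; lra). lra.
Qed.

Lemma Rabs_le_between x c : Rabs x <= c -> - c <= x <= c.
Proof. unfold Rabs; destruct Rcase_abs; lra. Qed.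

Lemma cont_on_bounded a b f : a <= b -> cont_on a b f ->
  exists C, forall t, a <= t <= b -> Rabs (f t) <= C.
Proof.
  intros Hab Hf.
  destruct (continuity_ab_maj (fun s => Rabs (f (clamp a b s))) a b Hab) as [m [Hm _]].
  - intros c _. apply continuity_pt_filterlim.
    apply (continuous_comp (fun s => f (clamp a b s)) Rabs);
      [apply cont_on_clamp; auto | apply continuous_Rabs].
  - exists (Rabs (f (clamp a b m))). intros t Ht. specialize (Hm t Ht). simpl in Hm.
    rewrite clamp_id in Hm; auto.
Qed.

Lemma lsum_uniform_bound {I : Type} (l : list I) (P : I -> R -> Prop) :
  (forall i, exists C, forall v, P i v -> Rabs v <= C) ->
  exists C, 0 <= C /\ forall i v, In i l -> P i v -> Rabs v <= C.
Proof.
  intros H. induction l as [|a l IH].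
  - exists 0. split; [lra|]. intros i v [].
  - destruct IH as [C [HC0 HC]]. destruct (H a) as [Ca HCa].
    exists (Rmax C (Rabs Ca)). split; [eapply Rle_trans; [exact HC0 | apply Rmax_l]|].
    intros i v [<-|Hi] HP.
    + eapply Rle_trans; [apply HCa; auto|].
      eapply Rle_trans; [apply Rle_abs | apply Rmax_r].
    + eapply Rle_trans; [apply (HC i v Hi HP) | apply Rmax_l].
Qed.

Lemma finite_uniform_bound {I : finite_type} (P : I -> R -> Prop) :
  (forall i, exists C, forall v, P i v -> Rabs v <= C) ->
  exists C, 0 <= C /\ forall i v, P i v -> Rabs v <= C.
Proof.
  intros H. destruct (lsum_uniform_bound (ft_enum I) P H) as [C [H0 H1]].
  exists C; split; auto. intros i v; apply H1, ft_full.
Qed.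

Lemma cont_on_matrix_bounded {X : finite_type} a b (M : R -> X -> X -> R) :
  a <= b -> (forall x y, cont_on a b (fun t => M t x y)) ->
  exists C, 0 <= C /\ forall t x y, a <= t <= b -> Rabs (M t x y) <= C.
Proof.
  intros Hab HM.
  destruct (finite_uniform_bound (fun x v => exists y t, a <= t <= b /\ v = M t x y))
    as [C [HC0 HC]].
  - intros x.
    destruct (finite_uniform_bound (fun y v => exists t, a <= t <= b /\ v = M t x y))
      as [C [_ HC]].
    + intros y. destruct (cont_on_bounded a b (fun t => M t x y)) as [C HC]; auto.
      exists C. intros v [t [Ht ->]]. auto.
    + exists C. intros v [y [t [Ht ->]]]. apply (HC y). exists t; auto.
  - exists C. split; auto. intros t x y Ht. apply (HC x). exists y, t; auto.
Qed.

Lemma gronwall_zero a b (phi dphi : R -> R) K :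
  a <= b -> cont_on a b phi -> (forall t, a <= t <= b -> 0 <= phi t) -> phi a = 0 ->
  (forall t, a < t < b -> is_derive phi t (dphi t)) ->
  (forall t, a <= t <= b -> dphi t <= K * phi t) ->
  forall t, a <= t <= b -> phi t = 0.
Proof.
  intros Hab Hc Hpos H0 Hd Hle t Ht.
  set (psi := fun s => phi s * exp (- K * s)).
  assert (M : psi t <= psi a).
  { apply (derive_nonpos_le a t psi (fun s => dphi s * exp (-K * s) + phi s * (-K * exp (-K * s)))).
    - lra.
    - apply cont_on_mult; [lra | apply (cont_on_sub a b); auto; lra | apply cont_on_exp_lin; lra].
    - intros s Hs. apply (is_derive_mult phi (fun s => exp (-K * s))).
      + apply Hd; lra.
      + auto_derive; auto. ring.
      + intros; apply Rmult_comm.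
    - intros s Hs. specialize (Hle s ltac:(lra)). pose proof (exp_pos (-K*s)).
      assert ((dphi s - K * phi s) * exp (-K*s) <= 0) by (apply Rmult_le_0_r; lra). nra. }
  unfold psi in M. rewrite H0 in M. pose proof (exp_pos (-K*t)). pose proof (Hpos t Ht).
  assert (phi t <= 0) by (destruct (Rle_dec (phi t) 0); auto; exfalso; nra).
  lra.
Qed.

Definition negp (z : R) : R := Rmin z 0.

Lemma negp_le z : negp z <= 0.
Proof. apply Rmin_r. Qed.

Lemma negp_zero z : 0 <= z -> negp z = 0.
Proof. intros; unfold negp; rewrite Rmin_right; lra. Qed.

Lemma negp_sq_eq0 z : negp z * negp z = 0 -> 0 <= z.
Proof. unfold negp, Rmin. destruct Rle_dec; nra. Qed.

Lemma continuous_negp z : continuous negp z.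
Proof.
  apply continuous_ext with (f := fun u => (u - Rabs u) / 2).
  - intros u. unfold negp, Rmin, Rabs. destruct Rle_dec; destruct Rcase_abs; lra.
  - apply (continuous_mult (fun u => u - Rabs u) (fun _ => /2)); [|apply continuous_const].
    apply (continuous_minus (fun u => u) Rabs); [apply continuous_id | apply continuous_Rabs].
Qed.

Lemma is_derive_negp_sq z : is_derive (fun u => negp u * negp u) z (2 * negp z).
Proof.
  unfold negp. destruct (Rlt_or_le z 0) as [Hz|Hz].
  - apply is_derive_ext_loc with (f := fun u => u * u).
    + assert (Hp : 0 < - z) by lra. exists (mkposreal _ Hp). intros u Hu.
      change (Rabs (u - z) < - z) in Hu.
      unfold Rabs in Hu; destruct Rcase_abs in Hu; rewrite Rmin_left; lra.
    + rewrite Rmin_left by lra. auto_derive; auto. ring.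
  - destruct (Rle_lt_or_eq_dec 0 z Hz) as [Hz'| <-].
    + apply is_derive_ext_loc with (f := fun _ => 0).
      * exists (mkposreal _ Hz'). intros u Hu. change (Rabs (u - z) < z) in Hu.
        unfold Rabs in Hu; destruct Rcase_abs in Hu; rewrite Rmin_right; lra.
      * rewrite Rmin_right, Rmult_0_r by lra. apply (is_derive_const 0).
    + rewrite Rmin_right, Rmult_0_r by lra.
      apply is_derive_Reals. intros eps Heps. exists (mkposreal _ Heps).
      intros h Hh Hhs. simpl in Hhs. rewrite Rplus_0_l, (Rmin_right 0 0) by lra.
      replace ((Rmin h 0 * Rmin h 0 - 0 * 0) / h - 0) with (Rmin h 0 * (Rmin h 0 / h))
        by (field; auto).
      unfold Rmin. destruct Rle_dec.
      * replace (h / h) with 1 by (field; auto). rewrite Rmult_1_r. auto.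
      * replace (0 / h) with 0 by (field; auto). rewrite Rmult_0_r, Rabs_R0. auto.
Qed.

(* The coupling term of [d/dt negp(p_z)^2] is bounded by squared negative parts:
   on the diagonal any coefficient works, off it we need [m >= 0]. *)
Lemma negp_coupling_le m C u v : Rabs m <= C -> (0 <= m \/ u = v) ->
  2 * negp u * (m * v) <= C * (negp u * negp u + negp v * negp v).
Proof.
  intros Hm Hoff. pose proof (Rabs_le_between _ _ Hm) as [Hm1 Hm2].
  pose proof (negp_le u); pose proof (negp_le v).
  assert (Hv : negp v <= v) by apply Rmin_l.
  assert (Hcross : 2 * (negp u * negp v) <= negp u * negp u + negp v * negp v)
    by (pose proof (Rle_0_sqr (negp u - negp v)); unfold Rsqr in *; lra).
  destruct Hoff as [Hpos| ->].
  - assert (0 <= - negp u * (v - negp v)) by (apply Rmult_le_pos; lra).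
    assert (m * (negp u * v) <= m * (negp u * negp v)) by (apply Rmult_le_compat_l; lra).
    assert (m * (negp u * negp v) <= C * (negp u * negp v)) by (apply Rmult_le_compat_r; nra).
    assert (C * (2 * (negp u * negp v)) <= C * (negp u * negp u + negp v * negp v))
      by (apply Rmult_le_compat_l; lra).
    nra.
  - assert (E : negp v * v = negp v * negp v) by (unfold negp, Rmin; destruct Rle_dec; lra).
    assert (m * (negp v * negp v) <= C * (negp v * negp v)) by (apply Rmult_le_compat_r; nra).
    nra.
Qed.

Section LinearSystems.
Context {X : finite_type}.

(* [M t x y] is the coefficient of [p y] in the equation for [p x]. *)
Definition lin_sol a b (M : R -> X -> X -> R) (p : R -> X -> R) : Prop :=
  (forall x, cont_on a b (fun t => p t x)) /\
  (forall t x, a < t < b -> is_derive (fun u => p u x) t (fsum (fun y => M t x y * p t y))).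

(* [sum_z negp(p_z)^2] vanishes at [a] and satisfies a Gronwall inequality. *)
Lemma lin_sol_nonneg a b (M : R -> X -> X -> R) (p : R -> X -> R) C :
  a <= b -> 0 <= C ->
  (forall t x y, a <= t <= b -> Rabs (M t x y) <= C) ->
  (forall t x y, a <= t <= b -> x <> y -> 0 <= M t x y) ->
  lin_sol a b M p -> (forall x, 0 <= p a x) ->
  forall t x, a <= t <= b -> 0 <= p t x.
Proof.
  intros Hab HC HM Hoff [Hc Hd] H0 t x Ht.
  set (N := fsum (fun _ : X => 1)).
  set (n := fun s z => negp (p s z)).
  set (phi := fun s => fsum (fun z => n s z * n s z)).
  set (dphi := fun s => fsum (fun z => 2 * n s z * fsum (fun y => M s z y * p s y))).
  assert (G : phi t = 0).
  { apply (gronwall_zero a b phi dphi (2 * C * N)); auto.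
    - apply cont_on_fsum; auto. intros z.
      apply cont_on_mult; auto; apply (cont_on_comp a b (fun s => p s z) negp); auto;
        intros; apply continuous_negp.
    - intros s Hs. apply fsum_nonneg. intros z. apply Rle_0_sqr.
    - unfold phi, n. rewrite (fsum_ext _ (fun _ => 0)); [apply fsum_zero|].
      intros z. rewrite negp_zero; auto; lra.
    - intros s Hs. apply is_derive_fsum. intros z.
      pose proof (is_derive_comp (fun u => negp u * negp u) (fun u => p u z) s _ _
        (is_derive_negp_sq (p s z)) (Hd s z Hs)) as D.
      change (is_derive (fun u => n u z * n u z) s
        (fsum (fun y => M s z y * p s y) * (2 * n s z))) in D.
      rewrite Rmult_comm, Rmult_assoc in D. rewrite Rmult_assoc. exact D.
    - intros s Hs.
      assert (Hsum : forall z, fsum (fun y => C * (n s z * n s z + n s y * n s y))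
                               = C * N * (n s z * n s z) + C * phi s).
      { intros z. rewrite (fsum_ext _ (fun y => C * (n s z * n s z) + C * (n s y * n s y)))
          by (intros; ring).
        rewrite fsum_plus, fsum_const, fsum_scal. fold N. unfold phi. ring. }
      eapply Rle_trans.
      { apply (fsum_le _ (fun z => fsum (fun y => C * (n s z * n s z + n s y * n s y)))).
        intros z. rewrite <- fsum_scal. apply fsum_le. intros y.
        apply negp_coupling_le; [auto|].
        destruct (ft_eq_dec X z y) as [->|ne]; [right; reflexivity | left; apply Hoff; auto]. }
      right. rewrite (fsum_ext _ _ Hsum), fsum_plus, fsum_scal, fsum_const. fold N.
      change (fsum (fun z => n s z * n s z)) with (phi s). ring. }
  apply negp_sq_eq0, Rle_antisym.
  - rewrite <- G. apply (fsum_ge_term (fun z => n t z * n t z)). intros; apply Rle_0_sqr.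
  - apply Rle_0_sqr.
Qed.

Lemma lin_sol_unique a b (M : R -> X -> X -> R) p q :
  a <= b -> (forall x y, cont_on a b (fun t => M t x y)) ->
  (forall t x y, a <= t <= b -> x <> y -> 0 <= M t x y) ->
  lin_sol a b M p -> lin_sol a b M q -> (forall x, p a x = q a x) ->
  forall t x, a <= t <= b -> p t x = q t x.
Proof.
  intros Hab Hc Hoff [Hpc Hpd] [Hqc Hqd] H0 t x Ht.
  destruct (cont_on_matrix_bounded a b M Hab Hc) as [C [HC0 HC]].
  assert (A : forall sg, 0 <= sg * (p t x - q t x)).
  { intros sg. apply (lin_sol_nonneg a b M (fun t x => sg * (p t x - q t x)) C); auto.
    - split.
      + intros z. apply cont_on_mult, cont_on_minus; auto using cont_on_const.
      + intros s z Hs.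
        rewrite (fsum_ext _ (fun y => sg * (M s z y * p s y - M s z y * q s y))) by (intros; ring).
        rewrite fsum_scal, fsum_minus.
        apply (is_derive_scal (fun u => p u z - q u z)), (is_derive_minus (fun u => p u z)); auto.
    - intros z. rewrite H0. lra. }
  pose proof (A 1); pose proof (A (-1)). lra.
Qed.

Lemma lin_sol_pos a b (M : R -> X -> X -> R) (p : R -> X -> R) C :
  a <= b -> 0 <= C ->
  (forall t x y, a <= t <= b -> Rabs (M t x y) <= C) ->
  (forall t x y, a <= t <= b -> x <> y -> 0 <= M t x y) ->
  lin_sol a b M p -> (forall t x, a <= t <= b -> 0 <= p t x) ->
  forall x, 0 < p a x -> forall t, a <= t <= b -> 0 < p t x.
Proof.
  intros Hab HC HM Hoff [Hc Hd] Hpos x H0 t Ht.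
  (* [e^{Ct} p_x(t)] is nondecreasing since [M_xx >= -C] and the other terms are >= 0 *)
  set (f := fun s => - (exp (C * s) * p s x)).
  assert (Hm : f t <= f a).
  { apply (derive_nonpos_le a t f
      (fun s => - (C * exp (C * s) * p s x + exp (C * s) * fsum (fun y => M s x y * p s y)))).
    - lra.
    - apply cont_on_opp, cont_on_mult; try lra; [apply cont_on_exp_lin; lra|].
      apply (cont_on_sub a b); auto; lra.
    - intros s Hs. apply (is_derive_opp (fun s => exp (C * s) * p s x)).
      apply (is_derive_mult (fun s => exp (C * s)) (fun s => p s x)).
      + auto_derive; auto. ring.
      + apply Hd. lra.
      + intros; apply Rmult_comm.
    - intros s Hs. assert (Hs' : a <= s <= b) by lra. rewrite (fsum_split x).
      assert (0 <= offdiag_sum x (fun y => M s x y * p s y)).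
      { apply offdiag_nonneg. intros y Hy. apply Rmult_le_pos; [apply Hoff | apply Hpos]; auto. }
      pose proof (Rabs_le_between _ _ (HM s x x Hs')). pose proof (Hpos s x Hs').
      pose proof (exp_pos (C * s)).
      assert (0 <= (C + M s x x) * p s x) by (apply Rmult_le_pos; lra).
      assert (0 <= exp (C * s) * ((C + M s x x) * p s x + offdiag_sum x (fun y => M s x y * p s y)))
        by (apply Rmult_le_pos; lra).
      nra. }
  unfold f in Hm. pose proof (exp_pos (C * t)). pose proof (exp_pos (C * a)).
  assert (0 < exp (C * a) * p a x) by (apply Rmult_lt_0_compat; lra).
  destruct (Rle_dec (p t x) 0); [exfalso; nra | lra].
Qed.

End LinearSystems.

Lemma is_lim_seq_of_cauchy_rate (a e : nat -> R) :
  (forall n m, (n <= m)%nat -> Rabs (a m - a n) <= e n) -> is_lim_seq e 0 ->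
  exists l : R, is_lim_seq a l /\ forall n, Rabs (l - a n) <= e n.
Proof.
  intros H He.
  assert (Hc : ex_lim_seq_cauchy a).
  { intros eps. apply is_lim_seq_spec in He.
    assert (Hp : 0 < eps / 2) by (destruct eps; simpl; lra).
    destruct (He (mkposreal _ Hp)) as [N HN]. exists N. intros n m Hn Hm.
    specialize (HN N (Nat.le_refl N)). simpl in HN. rewrite Rminus_0_r in HN.
    pose proof (H N n Hn); pose proof (H N m Hm).
    pose proof (Rabs_triang (a n - a N) (a N - a m)) as Htr.
    replace (a n - a N + (a N - a m)) with (a n - a m) in Htr by ring.
    rewrite Rabs_minus_sym in H1. pose proof (Rle_abs (e N)).
    destruct eps; simpl in *; lra. }
  apply ex_lim_seq_cauchy_corr in Hc. destruct Hc as [l Hl]. exists l. split; auto.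
  intros n. destruct (Rle_dec (Rabs (l - a n)) (e n)) as [ok|ko]; auto. exfalso.
  assert (Hd : 0 < Rabs (l - a n) - e n) by lra.
  apply is_lim_seq_spec in Hl. destruct (Hl (mkposreal _ Hd)) as [N HN].
  specialize (HN (max N n) (Nat.le_max_l _ _)). simpl in HN.
  specialize (H n (max N n) (Nat.le_max_r _ _)).
  pose proof (Rabs_triang (l - a (max N n)) (a (max N n) - a n)) as Htr.
  replace (l - a (max N n) + (a (max N n) - a n)) with (l - a n) in Htr by ring.
  rewrite Rabs_minus_sym in HN. lra.
Qed.

Section Picard.
Context {X : finite_type}.
Variables (L M : R) (B : R -> X -> X -> R) (u0 : X -> R).
Hypotheses (HL : 0 <= L) (HM0 : 0 <= M)
  (HB : forall x y, cont_on 0 L (fun t => B t x y))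
  (HBM : forall t x y, 0 <= t <= L -> Rabs (B t x y) <= M).

(* Both [B] and the iterates are read through [clamp 0 L], so that everything is
   continuous on all of [R] while only the values on [0,L] matter. *)
Definition picard_rhs (v : R -> X -> R) (s : R) (x : X) : R :=
  fsum (fun y => B (clamp 0 L s) x y * v (clamp 0 L s) y).

Fixpoint picard_iter (n : nat) : R -> X -> R :=
  match n with
  | O => fun _ => u0
  | S n => fun t x => u0 x + RInt (fun s => picard_rhs (picard_iter n) s x) 0 t
  end.

Definition picard_limit (t : R) (x : X) : R :=
  real (Lim_seq (fun n => picard_iter n (clamp 0 L t) x)).

Let N := fsum (fun _ : X => 1).
Let A := L * M * fsum (fun y => Rabs (u0 y)).
Let lam := 2 * N * M + 1.
Let err (n : nat) := 2 * A * exp (lam * L) * (/2) ^ n.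

Let N_nonneg : 0 <= N.
Proof. apply fsum_nonneg; intros; lra. Qed.

Let A_nonneg : 0 <= A.
Proof. repeat apply Rmult_le_pos; auto. apply fsum_nonneg; intros; apply Rabs_pos. Qed.

Let lam_pos : 0 < lam.
Proof. unfold lam. pose proof N_nonneg. nra. Qed.

Lemma picard_rhs_continuous v x t :
  (forall y, cont_on 0 L (fun s => v s y)) -> continuous (fun s => picard_rhs v s x) t.
Proof.
  intros Hv. apply (cont_on_clamp 0 L (fun s => fsum (fun y => B s x y * v s y))); auto.
  apply cont_on_fsum; auto. intros y. apply cont_on_mult; auto.
Qed.

Lemma picard_rhs_diff_le v w s x :
  Rabs (picard_rhs v s x - picard_rhs w s x)
  <= M * fsum (fun y => Rabs (v (clamp 0 L s) y - w (clamp 0 L s) y)).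
Proof.
  unfold picard_rhs. rewrite <- fsum_minus.
  rewrite (fsum_ext _ (fun y => B (clamp 0 L s) x y * (v (clamp 0 L s) y - w (clamp 0 L s) y)))
    by (intros; ring).
  apply fsum_mul_bound. intros; apply HBM, clamp_in; auto.
Qed.

Lemma picard_iter_continuous n x t : continuous (fun s => picard_iter n s x) t.
Proof.
  revert x t. induction n as [|n IH]; intros x t; simpl.
  - apply continuous_const.
  - apply (continuous_plus (fun _ => u0 x)); [apply continuous_const|].
    apply RInt_continuous_continuous. intros s. apply picard_rhs_continuous.
    intros y. apply cont_on_of_continuous with (g := fun s => picard_iter n s y); auto.
Qed.

Lemma picard_iter_ex_RInt n x a b : ex_RInt (fun s => picard_rhs (picard_iter n) s x) a b.
Proof.
  apply (@ex_RInt_continuous R_CompleteNormedModule). intros s _.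
  apply picard_rhs_continuous. intros y.
  apply cont_on_of_continuous with (g := fun s => picard_iter n s y); auto.
  intros; apply picard_iter_continuous.
Qed.

Lemma picard_iter_step0_le x t : 0 <= t <= L ->
  Rabs (picard_iter 1 t x - picard_iter 0 t x) <= A * exp (lam * t).
Proof.
  intros Ht. simpl. rewrite Rplus_minus_l.
  set (S := M * fsum (fun y => Rabs (u0 y))).
  eapply Rle_trans.
  { apply (RInt_abs_le _ (fun _ => S) 0 t); try lra.
    - apply (picard_iter_ex_RInt 0).
    - apply ex_RInt_const.
    - intros s Hs. apply fsum_mul_bound. intros; apply HBM, clamp_in; auto. }
  rewrite RInt_const. change (scal (t - 0) S) with ((t - 0) * S).
  assert (1 <= exp (lam * t)) by (pose proof (exp_ineq1_le (lam * t)); nra).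
  assert (0 <= S) by (apply Rmult_le_pos; auto; apply fsum_nonneg; intros; apply Rabs_pos).
  assert (Hts : (t - 0) * S <= L * S) by (apply Rmult_le_compat_r; lra).
  replace A with (L * S) by (unfold A, S; ring).
  eapply Rle_trans; [exact Hts|]. rewrite <- (Rmult_1_r (L * S)) at 1.
  apply Rmult_le_compat_l; [apply Rmult_le_pos|]; lra.
Qed.

(* The choice [lam > 2 N M] is what makes each Picard step contract by [1/2] in the
   weighted norm [sup_t exp (-lam t) |.|]. *)
Lemma picard_weight_contraction a t : 0 <= a ->
  N * M * a * RInt (fun s => exp (lam * s)) 0 t <= / 2 * a * exp (lam * t).
Proof.
  intros Ha. rewrite RInt_exp_lin by auto.
  pose proof (exp_pos (lam * t)).
  assert (Hfrac : N * M / lam <= /2).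
  { apply Rmult_le_reg_r with lam; [lra|]. unfold Rdiv.
    rewrite Rmult_assoc, Rinv_l, Rmult_1_r by lra. unfold lam. nra. }
  assert (0 <= N * M / lam) by (apply Rmult_le_pos; [nra | left; apply Rinv_0_lt_compat; lra]).
  replace (N * M * a * ((exp (lam * t) - 1) / lam))
    with (N * M / lam * a * (exp (lam * t) - 1)) by (field; lra).
  apply Rle_trans with (N * M / lam * a * exp (lam * t)).
  - apply Rmult_le_compat_l; [apply Rmult_le_pos|]; lra.
  - apply Rmult_le_compat_r; [lra|]. apply Rmult_le_compat_r; lra.
Qed.

Lemma picard_iter_step_le n x t : 0 <= t <= L ->
  Rabs (picard_iter (S n) t x - picard_iter n t x) <= A * exp (lam * t) * (/2) ^ n.
Proof.
  revert x t. induction n as [|n IH]; intros x t Ht.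
  - rewrite pow_O, Rmult_1_r. apply picard_iter_step0_le; auto.
  - change (picard_iter (S (S n)) t x) with
      (u0 x + RInt (fun s => picard_rhs (picard_iter (S n)) s x) 0 t).
    change (picard_iter (S n) t x) with
      (u0 x + RInt (fun s => picard_rhs (picard_iter n) s x) 0 t).
    rewrite Rminus_plus_l_l.
    rewrite <- (RInt_minus (V := R_CompleteNormedModule)) by apply picard_iter_ex_RInt.
    set (a := A * (/2) ^ n).
    assert (Ha : 0 <= a) by (apply Rmult_le_pos; auto; apply pow_le; lra).
    eapply Rle_trans.
    { apply (RInt_abs_le _ (fun s => N * M * a * exp (lam * s)) 0 t); try lra.
      - apply (ex_RInt_minus (V := R_CompleteNormedModule)); apply picard_iter_ex_RInt.
      - apply ex_RInt_cont_on; [lra|].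
        apply cont_on_mult, cont_on_exp_lin; auto using cont_on_const; lra.
      - intros s Hs. eapply Rle_trans; [apply picard_rhs_diff_le|].
        rewrite clamp_id by lra.
        eapply Rle_trans; [apply Rmult_le_compat_l; [auto|]|].
        + apply (fsum_abs_bound (fun y => picard_iter (S n) s y - picard_iter n s y)).
          intros y. apply IH. lra.
        + fold N. unfold a. right. ring. }
    rewrite (RInt_scal (V := R_CompleteNormedModule) (fun s => exp (lam * s))).
    2: { apply ex_RInt_cont_on; [lra | apply cont_on_exp_lin; lra]. }
    change (scal (N * M * a) (RInt (fun s => exp (lam * s)) 0 t))
      with (N * M * a * RInt (fun s => exp (lam * s)) 0 t).
    eapply Rle_trans; [apply picard_weight_contraction; auto|].
    unfold a. simpl. right. ring.
Qed.

Lemma picard_iter_cauchy n m x t : (n <= m)%nat -> 0 <= t <= L ->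
  Rabs (picard_iter m t x - picard_iter n t x) <= err n.
Proof.
  intros Hnm Ht. replace m with (n + (m - n))%nat by lia.
  generalize (m - n)%nat as k. intros k.
  assert (0 <= A * exp (lam * L)) by (apply Rmult_le_pos; [auto | left; apply exp_pos]).
  assert (Hk : Rabs (picard_iter (n + k) t x - picard_iter n t x)
               <= 2 * A * exp (lam * L) * ((/2) ^ n - (/2) ^ (n + k))).
  { induction k as [|k IH].
    - rewrite Nat.add_0_r, Rminus_diag, Rabs_R0. lra.
    - replace (picard_iter (n + S k) t x - picard_iter n t x)
        with ((picard_iter (S (n + k)) t x - picard_iter (n + k) t x)
              + (picard_iter (n + k) t x - picard_iter n t x))
        by (rewrite Nat.add_succ_r; ring).
      eapply Rle_trans; [apply Rabs_triang|].
      assert (A * exp (lam * t) * (/2) ^ (n + k) <= A * exp (lam * L) * (/2) ^ (n + k)).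
      { apply Rmult_le_compat_r; [apply pow_le; lra|]. apply Rmult_le_compat_l; [auto|].
        destruct (Rle_lt_or_eq_dec t L (proj2 Ht)) as [h|h].
        - left; apply exp_increasing, Rmult_lt_compat_l; [exact lam_pos | exact h].
        - rewrite h; right; reflexivity. }
      pose proof (picard_iter_step_le (n + k) x t Ht).
      rewrite Nat.add_succ_r. simpl pow. lra. }
  eapply Rle_trans; [exact Hk|]. unfold err.
  assert (0 <= (/2) ^ (n + k)) by (apply pow_le; lra).
  apply Rmult_le_compat_l; lra.
Qed.

Lemma is_lim_seq_err : is_lim_seq err 0.
Proof.
  unfold err. replace (Finite 0) with (Rbar_mult (2 * A * exp (lam * L)) 0) by (simpl; f_equal; ring).
  apply is_lim_seq_scal_l, is_lim_seq_geom. rewrite Rabs_pos_eq; lra.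
Qed.

Lemma picard_limit_spec t x :
  is_lim_seq (fun n => picard_iter n (clamp 0 L t) x) (picard_limit t x) /\
  forall n, Rabs (picard_limit t x - picard_iter n (clamp 0 L t) x) <= err n.
Proof.
  destruct (is_lim_seq_of_cauchy_rate (fun n => picard_iter n (clamp 0 L t) x) err)
    as [l [Hl Hb]].
  - intros n m Hnm. apply picard_iter_cauchy, clamp_in; auto.
  - apply is_lim_seq_err.
  - unfold picard_limit. rewrite (is_lim_seq_unique _ _ Hl). simpl. auto.
Qed.

(* The iterates converge uniformly, so their integrals converge to the integral of
   the limit. *)
Lemma picard_limit_RInt x t : exists I,
  is_RInt (fun s => picard_rhs picard_limit s x) 0 t I /\
  is_lim_seq (fun n => RInt (fun s => picard_rhs (picard_iter n) s x) 0 t) I.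
Proof.
  assert (Hunif : is_lim_seq (fun n => M * (N * err n)) 0).
  { replace (Finite 0) with (Rbar_mult M (Rbar_mult N 0)) by (simpl; f_equal; ring).
    apply is_lim_seq_scal_l, is_lim_seq_scal_l, is_lim_seq_err. }
  destruct (filterlim_RInt (V := R_CompleteNormedModule)
              (fun n s => picard_rhs (picard_iter n) s x) 0 t eventually eventually_filter
              (fun s => picard_rhs picard_limit s x)
              (fun n => RInt (fun s => picard_rhs (picard_iter n) s x) 0 t)) as [I [H1 H2]].
  - intros n. apply (RInt_correct (V := R_CompleteNormedModule)), picard_iter_ex_RInt.
  - apply filterlim_locally. intros eps.
    apply is_lim_seq_spec in Hunif. destruct (Hunif eps) as [N0 HN0].
    exists N0. intros n Hn s. specialize (HN0 n Hn). rewrite Rminus_0_r in HN0.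
    change (Rabs (picard_rhs (picard_iter n) s x - picard_rhs picard_limit s x) < eps).
    eapply Rle_lt_trans; [|exact HN0]. eapply Rle_trans; [|apply Rle_abs].
    eapply Rle_trans; [apply picard_rhs_diff_le|]. apply Rmult_le_compat_l; auto.
    eapply Rle_trans; [apply fsum_abs_bound with (K := err n)|fold N; right; ring].
    intros y. rewrite Rabs_minus_sym.
    eapply Rle_trans; [|apply (proj2 (picard_limit_spec (clamp 0 L s) y) n)].
    unfold picard_limit. rewrite (clamp_id 0 L (clamp 0 L s)) by (apply clamp_in; auto). lra.
  - exists I. auto.
Qed.

Lemma picard_limit_integral_eq t x : 0 <= t <= L ->
  picard_limit t x = u0 x + RInt (fun s => picard_rhs picard_limit s x) 0 t.
Proof.
  intros Ht. destruct (picard_limit_RInt x t) as [I [H1 H2]].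
  rewrite (is_RInt_unique _ _ _ _ H1).
  pose proof (proj1 (picard_limit_spec t x)) as H3. apply is_lim_seq_incr_1 in H3.
  assert (H4 : is_lim_seq (fun n => picard_iter (S n) (clamp 0 L t) x) (u0 x + I)).
  { eapply is_lim_seq_ext; [|apply is_lim_seq_plus'; [apply is_lim_seq_const | exact H2]].
    intros n. simpl. rewrite clamp_id; auto. }
  pose proof (is_lim_seq_unique _ _ H3) as E3. rewrite (is_lim_seq_unique _ _ H4) in E3.
  injection E3. auto.
Qed.

Lemma lin_sol_exists :
  exists u : R -> X -> R, (forall x, u 0 x = u0 x) /\ lin_sol 0 L B u.
Proof.
  set (Phi := fun x t => RInt (fun s => picard_rhs picard_limit s x) 0 t).
  assert (HPhi : forall x t, is_RInt (fun s => picard_rhs picard_limit s x) 0 t (Phi x t)).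
  { intros x t. destruct (picard_limit_RInt x t) as [I [H1 _]].
    unfold Phi. rewrite (is_RInt_unique _ _ _ _ H1). auto. }
  assert (Hclamp : forall x s, picard_limit s x = u0 x + Phi x (clamp 0 L s)).
  { intros x s. unfold Phi. rewrite <- picard_limit_integral_eq by (apply clamp_in; auto).
    unfold picard_limit. rewrite (clamp_id 0 L (clamp 0 L s)) by (apply clamp_in; auto). auto. }
  assert (Hcont : forall x t, continuous (fun s => picard_limit s x) t).
  { intros x t. apply continuous_ext with (f := fun s => u0 x + Phi x (clamp 0 L s)).
    { intros; symmetry; apply Hclamp. }
    apply (continuous_plus (fun _ => u0 x)); [apply continuous_const|].
    apply (continuous_comp (clamp 0 L) (Phi x)); [apply continuous_clamp; auto|].
    apply (continuous_RInt_1 (fun s => picard_rhs picard_limit s x) 0).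
    apply filter_forall; auto. }
  exists picard_limit. split; [|split].
  - intros x. rewrite Hclamp, clamp_id by lra. unfold Phi. rewrite RInt_point. 
    change (u0 x + 0 = u0 x). ring.
  - intros x. apply cont_on_of_continuous with (g := fun s => picard_limit s x); auto.
  - intros t x Ht.
    apply is_derive_ext_loc with (f := fun s => u0 x + Phi x s).
    + assert (Hp : 0 < Rmin t (L - t)) by (apply Rmin_pos; lra).
      exists (mkposreal _ Hp). intros s Hs. change (Rabs (s - t) < Rmin t (L - t)) in Hs.
      pose proof (Rmin_l t (L - t)); pose proof (Rmin_r t (L - t)).
      rewrite Hclamp, (clamp_id 0 L s); auto. unfold Rabs in Hs; destruct Rcase_abs in Hs; lra.
    + replace (fsum (fun y => B t x y * picard_limit t y))
        with (0 + picard_rhs picard_limit t x)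
        by (unfold picard_rhs; rewrite clamp_id by lra; ring).
      apply (is_derive_plus (fun _ => u0 x)); [apply (is_derive_const (u0 x))|].
      apply (is_derive_RInt (fun s => picard_rhs picard_limit s x) (Phi x) 0 t).
      * apply filter_forall; auto.
      * apply picard_rhs_continuous. intros y.
        apply cont_on_of_continuous with (g := fun s => picard_limit s y); auto.
Qed.

End Picard.

Section Kolmogorov.
Context {X : finite_type}.

Lemma generator_fsum_diff (Q : R -> X -> X -> R) t x (f : X -> R) : is_generator Q ->
  fsum (fun y => Q t x y * f y) = offdiag_sum x (fun y => Q t x y * (f y - f x)).
Proof.
  intros [_ Hd]. rewrite (fsum_split x), Hd.
  rewrite (offdiag_ext x (fun y => Q t x y * (f y - f x)) (fun y => Q t x y * f y - f x * Q t x y))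
    by (intros; ring).
  rewrite offdiag_minus, offdiag_scal. ring.
Qed.

Lemma generator_forward_rhs (Q : R -> X -> X -> R) t x (p : X -> R) : is_generator Q ->
  offdiag_sum x (fun y => Q t y x * p y) - offdiag_sum x (fun y => Q t x y) * p x
  = fsum (fun y => Q t y x * p y).
Proof.
  intros [_ Hd]. rewrite (fsum_split x), Hd. change (fun y => Q t x y) with (Q t x). ring.
Qed.

Lemma kolmogorov_forward_lin_sol (Q : R -> X -> X -> R) s T p0 p :
  is_generator Q -> kolmogorov_forward Q s T p0 p -> lin_sol s T (fun t x y => Q t y x) p.
Proof.
  intros HG [_ [Hc Hd]]. split; auto. intros t x Ht.
  rewrite <- generator_forward_rhs by auto. apply Hd; auto.
Qed.

Lemma lin_sol_kolmogorov_forward (Q : R -> X -> X -> R) s T p0 p :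
  is_generator Q -> (forall x, p s x = p0 x) -> lin_sol s T (fun t x y => Q t y x) p ->
  kolmogorov_forward Q s T p0 p.
Proof.
  intros HG H0 [Hc Hd]. split; [|split]; auto. intros t x Ht.
  rewrite generator_forward_rhs by auto. apply Hd; auto.
Qed.

Lemma kolmogorov_forward_nonneg (Q : R -> X -> X -> R) s T p0 p :
  s <= T -> regular_generator T Q -> 0 <= s ->
  kolmogorov_forward Q s T p0 p -> (forall x, 0 <= p0 x) ->
  forall t x, s <= t <= T -> 0 <= p t x.
Proof.
  intros HsT [HG HQc] Hs Hk Hp0.
  destruct (cont_on_matrix_bounded s T (fun t x y => Q t y x)) as [C [HC0 HC]]; auto.
  { intros x y. apply (cont_on_sub 0 T); auto; lra. }
  apply (lin_sol_nonneg s T (fun t x y => Q t y x) p C); auto.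
  - intros t x y Ht Hxy. apply (proj1 HG); auto.
  - apply (kolmogorov_forward_lin_sol Q s T p0); auto.
  - intros x. rewrite (proj1 Hk). auto.
Qed.

Lemma forward_rhs_transfer (Q Q' : R -> X -> X -> R) t (p : X -> R) :
  is_generator Q -> is_generator Q' ->
  (forall z w, w <> z -> p z * Q t z w = p z * Q' t z w) ->
  forall x, fsum (fun y => Q t y x * p y) = fsum (fun y => Q' t y x * p y).
Proof.
  intros [_ HG] [_ HG'] H x.
  rewrite (fsum_split x), (fsum_split x (fun y => Q' t y x * p y)). f_equal.
  - rewrite HG, HG', !Ropp_mult_distr_l_reverse. f_equal.
    rewrite Rmult_comm, <- offdiag_scal, Rmult_comm, <- offdiag_scal. apply offdiag_ext; auto.
  - apply offdiag_ext. intros y Hy. rewrite Rmult_comm, H by auto. ring.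
Qed.

(* Solved forward in the reversed time [s = T - t]. *)
Lemma kolmogorov_backward_exists T (Q : R -> X -> X -> R) (phi : X -> R) :
  0 <= T -> regular_generator T Q -> (forall x, 0 < phi x) ->
  exists h : R -> X -> R,
    (forall x, h T x = phi x) /\
    (forall x, cont_on 0 T (fun t => h t x)) /\
    (forall t x, 0 < t < T -> is_derive (fun s => h s x) t (- fsum (fun y => Q t x y * h t y))) /\
    (forall t x, 0 <= t <= T -> 0 < h t x).
Proof.
  intros HT [[Hoff Hdiag] HQc] Hphi.
  set (B := fun s x y => Q (T - s) x y).
  assert (HBc : forall x y, cont_on 0 T (fun s => B s x y))
    by (intros; apply (cont_on_reflect T (fun t => Q t x y)); auto).
  assert (HBoff : forall t x y, 0 <= t <= T -> x <> y -> 0 <= B t x y)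
    by (intros; apply Hoff; auto).
  destruct (cont_on_matrix_bounded 0 T B HT HBc) as [C [HC0 HC]].
  destruct (lin_sol_exists T C B phi HT HC0 HBc HC) as [u [Hu0 Hsol]].
  assert (Hpos : forall t x, 0 <= t <= T -> 0 <= u t x).
  { apply (lin_sol_nonneg 0 T B u C); auto. intros z; rewrite Hu0; left; auto. }
  exists (fun t x => u (T - t) x). split; [|split; [|split]].
  - intros x. rewrite Rminus_diag. auto.
  - intros x. apply (cont_on_reflect T (fun t => u t x)); [exact HT | apply Hsol].
  - intros t x Ht.
    pose proof (is_derive_comp (fun s => u s x) (fun s => T - s) t _ (-1)
      (proj2 Hsol (T - t) x ltac:(lra))) as D.
    assert (E : scal (-1) (fsum (fun y => B (T - t) x y * u (T - t) y))
                = - fsum (fun y => Q t x y * u (T - t) y)).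
    { unfold B. replace (T - (T - t)) with t by ring.
      change (-1 * fsum (fun y => Q t x y * u (T - t) y) = - fsum (fun y => Q t x y * u (T - t) y)).
      ring. }
    rewrite <- E. apply D. auto_derive; auto.
  - intros t x Ht. apply (lin_sol_pos 0 T B u C); auto; [rewrite Hu0; auto | lra].
Qed.

End Kolmogorov.

Lemma chapman_kolmogorov {X : finite_type} (Q : R -> X -> X -> R) T t p0 p
    (K : X -> R -> X -> R) :
  regular_generator T Q -> 0 <= t <= T ->
  kolmogorov_forward Q 0 T p0 p ->
  (forall y, kolmogorov_forward Q t T (dirac y) (K y)) ->
  forall s z, t <= s <= T -> p s z = fsum (fun y => p t y * K y s z).
Proof.
  intros [HG HQc] Ht Hp HK.
  pose proof (fun y => kolmogorov_forward_lin_sol Q t T _ _ HG (HK y)) as HKsol.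
  destruct (kolmogorov_forward_lin_sol Q 0 T _ _ HG Hp) as [Hpc Hpd].
  apply (lin_sol_unique t T (fun t x y => Q t y x)); try lra.
  - intros a b. apply (cont_on_sub 0 T); auto; lra.
  - intros s a b Hs Hab. apply (proj1 HG); auto.
  - split.
    + intros z; apply (cont_on_sub 0 T); auto; lra.
    + intros s z Hs; apply Hpd; lra.
  - split.
    + intros z. apply cont_on_fsum; [lra|]. intros y. apply cont_on_mult, HKsol; auto using cont_on_const; lra.
    + intros s z Hs.
      replace (fsum (fun y => Q s y z * fsum (fun w => p t w * K w s y)))
        with (fsum (fun w => p t w * fsum (fun y => Q s y z * K w s y))).
      * apply is_derive_fsum. intros w. apply (is_derive_scal (fun u => K w u z)), HKsol; auto.
      * rewrite (fsum_ext _ (fun w => fsum (fun y => p t w * (Q s y z * K w s y))))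
          by (intros; rewrite fsum_scal; reflexivity).
        rewrite fsum_swap. apply fsum_ext. intros y. rewrite <- fsum_scal.
        apply fsum_ext; intros; ring.
  - intros z. rewrite (fsum_ext _ (fun y => p t y * dirac y z)).
    + rewrite fsum_dirac_r. reflexivity.
    + intros y. rewrite (proj1 (HK y)). reflexivity.
Qed.

Lemma xlogxy_same a : xlogxy a a = 0.
Proof.
  unfold xlogxy. destruct (Req_EM_T a 0); auto.
  unfold Rdiv. rewrite Rinv_r, ln_1 by auto. ring.
Qed.

Lemma kl_rate_self {X : finite_type} (Q : R -> X -> X -> R) t x : kl_rate Q Q t x = 0.
Proof.
  unfold kl_rate. rewrite <- (offdiag_zero x). apply offdiag_ext. intros y _.
  rewrite xlogxy_same. ring.
Qed.

Lemma exp_kl_self {X : finite_type} (Q : R -> X -> X -> R) p t : exp_kl Q Q p t = 0.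
Proof.
  unfold exp_kl. rewrite <- (@fsum_zero X). apply fsum_ext. intros x. rewrite kl_rate_self. ring.
Qed.

(* Doob's h-transform of [Qpre]: [Qpre_xy h_y / h_x] off the diagonal. Outside [0,T]
   the function [h] is frozen at the endpoints, so that this is a generator for all [t]. *)
Definition htransform {X : finite_type} (T : R) (Qpre : R -> X -> X -> R) (h : R -> X -> R)
    (t : R) (x y : X) : R :=
  if ft_eq_dec X y x
  then - offdiag_sum x (fun z => Qpre t x z * h (clamp 0 T t) z / h (clamp 0 T t) x)
  else Qpre t x y * h (clamp 0 T t) y / h (clamp 0 T t) x.

Section HTransform.
Context {X : finite_type}.
Variables (T : R) (Qpre : R -> X -> X -> R) (h : R -> X -> R).
Hypotheses (HT : 0 <= T) (HQpre : regular_generator T Qpre)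
  (hc : forall x, cont_on 0 T (fun t => h t x))
  (hpos : forall t x, 0 <= t <= T -> 0 < h t x)
  (hback : forall t x, 0 < t < T ->
     is_derive (fun s => h s x) t (- fsum (fun y => Qpre t x y * h t y))).

Local Notation Qh := (htransform T Qpre h).

Lemma htransform_offdiag t x y : 0 <= t <= T -> y <> x -> Qh t x y = Qpre t x y * h t y / h t x.
Proof.
  intros Ht Hy. unfold htransform. rewrite clamp_id by auto.
  destruct (ft_eq_dec X y x); congruence.
Qed.

Lemma htransform_eq0 t x y : 0 <= t <= T -> x <> y -> Qh t x y = 0 -> Qpre t x y = 0.
Proof.
  intros Ht Hxy Hz. rewrite htransform_offdiag in Hz by auto.
  pose proof (hpos t x Ht); pose proof (hpos t y Ht).
  unfold Rdiv in Hz. destruct (Rmult_integral _ _ Hz) as [Hz'|Hz'].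
  - destruct (Rmult_integral _ _ Hz'); [auto | lra].
  - exfalso. assert (0 < / h t x) by (apply Rinv_0_lt_compat; auto). lra.
Qed.

Lemma htransform_admissible : admissible T Qpre Qh.
Proof.
  destruct HQpre as [[Hoff Hdg] HQc].
  assert (Hcl : forall t y, 0 < h (clamp 0 T t) y) by (intros; apply hpos, clamp_in; auto).
  assert (Hoffc : forall x y, y <> x -> cont_on 0 T (fun t => Qh t x y)).
  { intros x y Hy. apply (cont_on_ext 0 T (fun t => Qpre t x y * h t y / h t x)).
    - intros t Ht. rewrite htransform_offdiag; auto.
    - apply cont_on_mult, cont_on_inv; auto using cont_on_mult.
      intros t Ht; pose proof (hpos t x Ht); lra. }
  split; [split; [split|]|].
  - intros t x y Hxy. unfold htransform. destruct (ft_eq_dec X y x); [congruence|].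
    apply Rmult_le_pos; [apply Rmult_le_pos; [apply Hoff | left]; auto|].
    left; apply Rinv_0_lt_compat; auto.
  - intros t x. unfold htransform at 1. destruct (ft_eq_dec X x x); [|congruence].
    f_equal. apply offdiag_ext. intros y Hy. unfold htransform.
    destruct (ft_eq_dec X y x); congruence.
  - intros x y. destruct (ft_eq_dec X y x) as [<-|ne]; auto.
    apply (cont_on_ext 0 T (fun t => - offdiag_sum y (fun z => Qh t y z))).
    + intros t Ht. unfold htransform at 2. destruct (ft_eq_dec X y y); [|congruence].
      f_equal. apply offdiag_ext. intros z Hz. unfold htransform.
      destruct (ft_eq_dec X z y); congruence.
    + apply cont_on_opp, cont_on_offdiag; auto.
  - intros t x y Ht Hxy Hz. rewrite htransform_offdiag, Hz by auto. unfold Rdiv. ring.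
Qed.

Lemma htransform_forward ppre x0 :
  kolmogorov_forward Qpre 0 T (dirac x0) ppre ->
  kolmogorov_forward Qh 0 T (dirac x0) (fun t x => ppre t x * h t x / h 0 x0).
Proof.
  intros Hk.
  destruct htransform_admissible as [[HQhg _] _].
  destruct (kolmogorov_forward_lin_sol Qpre 0 T (dirac x0) ppre (proj1 HQpre) Hk) as [Hpc Hpd].
  assert (Z : 0 < h 0 x0) by (apply hpos; lra).
  apply lin_sol_kolmogorov_forward; auto.
  - intros x. rewrite (proj1 Hk). unfold dirac.
    destruct (ft_eq_dec X x x0) as [->|]; [field; lra | unfold Rdiv; ring].
  - split.
    + intros x. apply cont_on_mult, cont_on_const; auto using cont_on_mult.
    + intros t x Ht. assert (Ht' : 0 <= t <= T) by lra.
      pose proof (hpos t x Ht') as hx.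
      assert (V : fsum (fun y => Qh t y x * (ppre t y * h t y / h 0 x0)) =
        / h 0 x0 * (fsum (fun y => Qpre t y x * ppre t y) * h t x
                    + ppre t x * - fsum (fun y => Qpre t x y * h t y))).
      { rewrite (fsum_split x (fun y => Qpre t y x * ppre t y)),
          (fsum_split x (fun y => Qpre t x y * h t y)),
          (fsum_split x (fun y => Qh t y x * (ppre t y * h t y / h 0 x0))),
          (proj2 HQhg t x).
        rewrite (offdiag_ext x (Qh t x) (fun y => / h t x * (Qpre t x y * h t y)))
          by (intros y Hy; rewrite htransform_offdiag by auto; field; lra).
        rewrite (offdiag_ext x (fun y => Qh t y x * (ppre t y * h t y / h 0 x0))
                   (fun y => (h t x / h 0 x0) * (Qpre t y x * ppre t y)))
          by (intros y Hy; rewrite htransform_offdiag by auto;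
              pose proof (hpos t y Ht'); field; lra).
        rewrite !offdiag_scal. field. lra. }
      rewrite V.
      pose proof (is_derive_mult (fun u => ppre u x) (fun u => h u x) t _ _
        (Hpd t x Ht) (hback t x Ht) ltac:(intros; apply Rmult_comm)) as D.
      eapply is_derive_ext; [|exact (is_derive_scal _ t (/ h 0 x0) _ D)].
      intros u. change (/ h 0 x0 * (ppre u x * h u x) = ppre u x * h u x / h 0 x0).
      unfold Rdiv; ring.
Qed.

Lemma kl_rate_htransform (Q : R -> X -> X -> R) t x : 0 <= t <= T ->
  (forall y, y <> x -> 0 <= Q t x y) ->
  (forall y, y <> x -> Qpre t x y = 0 -> Q t x y = 0) ->
  kl_rate Qpre Q t x = kl_rate Qh Q t x +
    offdiag_sum x (fun y => Q t x y * (ln (h t y) - ln (h t x)) + Qpre t x y - Qh t x y).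
Proof.
  intros Ht HQ Hac. unfold kl_rate. rewrite <- offdiag_plus. apply offdiag_ext.
  intros y Hy. rewrite htransform_offdiag by auto.
  enough (E : xlogxy (Q t x y) (Qpre t x y) = xlogxy (Q t x y) (Qpre t x y * h t y / h t x)
                + Q t x y * (ln (h t y) - ln (h t x))) by (rewrite E; ring).
  unfold xlogxy. destruct (Req_EM_T (Q t x y) 0) as [->|n]; [ring|].
  assert (Hq : 0 < Q t x y) by (destruct (HQ y Hy); auto; congruence).
  assert (Hp : 0 < Qpre t x y).
  { destruct (proj1 (proj1 HQpre) t x y (not_eq_sym Hy)) as [p|p]; auto.
    exfalso. apply n, Hac; auto. }
  pose proof (hpos t x Ht); pose proof (hpos t y Ht).
  rewrite !ln_div, ln_mult; auto using Rmult_lt_0_compat, Rdiv_lt_0_compat. ring.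
Qed.

(* The [log h] terms of [kl_rate_htransform], averaged against the forward marginals of
   [Q], add up to the time derivative of [sum_x p_t(x) log h_t(x)]. *)
Definition log_h_flux (Q : R -> X -> X -> R) (p : R -> X -> R) (t : R) : R :=
  fsum (fun x => fsum (fun y => Q t y x * p t y) * ln (h t x)
                 + p t x * (- fsum (fun y => Qpre t x y * h t y) * / h t x)).

Lemma exp_kl_htransform (Q : R -> X -> X -> R) p t : 0 <= t <= T ->
  is_generator Q -> (forall x y, x <> y -> Qpre t x y = 0 -> Q t x y = 0) ->
  exp_kl Qpre Q p t = exp_kl Qh Q p t + log_h_flux Q p t.
Proof.
  intros Ht HQ Hac.
  pose proof (proj1 HQpre) as HQp.
  assert (Hh : forall y, 0 < h t y) by auto.
  set (O := fun x => offdiag_sum x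
    (fun y => Q t x y * (ln (h t y) - ln (h t x)) + Qpre t x y - Qh t x y)).
  assert (E1 : exp_kl Qpre Q p t = exp_kl Qh Q p t + fsum (fun x => p t x * O x)).
  { unfold exp_kl. rewrite <- fsum_plus. apply fsum_ext. intros x.
    rewrite kl_rate_htransform by (auto; intros; apply (proj1 HQ); auto).
    unfold O. ring. }
  rewrite E1. f_equal. unfold log_h_flux. rewrite fsum_plus.
  assert (E2 : fsum (fun x => fsum (fun y => Q t y x * p t y) * ln (h t x)) =
               fsum (fun x => p t x * offdiag_sum x (fun y => Q t x y * (ln (h t y) - ln (h t x))))).
  { rewrite (fsum_ext _ (fun x => fsum (fun y => Q t y x * p t y * ln (h t x)))).
    2: { intros x. rewrite Rmult_comm, <- fsum_scal. apply fsum_ext; intros; ring. }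
    rewrite fsum_swap. apply fsum_ext. intros x.
    rewrite <- (generator_fsum_diff Q t x (fun y => ln (h t y))) by auto.
    rewrite <- fsum_scal. apply fsum_ext; intros; ring. }
  assert (E3 : forall x, p t x * (- fsum (fun y => Qpre t x y * h t y) * / h t x) =
               p t x * offdiag_sum x (fun y => Qpre t x y - Qh t x y)).
  { intros x. rewrite (generator_fsum_diff Qpre t x (fun y => h t y)) by auto. f_equal.
    rewrite (offdiag_ext x (fun y => Qpre t x y - Qh t x y)
               (fun y => (- / h t x) * (Qpre t x y * (h t y - h t x)))).
    - rewrite offdiag_scal. ring.
    - intros y Hy. rewrite htransform_offdiag by auto. field. specialize (Hh x). lra. }
  rewrite E2, (fsum_ext _ _ E3), <- fsum_plus. apply fsum_ext. intros x.
  unfold O. rewrite <- Rmult_plus_distr_l, <- offdiag_plus. f_equal. apply offdiag_ext.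
  intros; ring.
Qed.

Lemma log_h_pairing_derive (Q : R -> X -> X -> R) s p t : 0 <= s -> s < t < T ->
  lin_sol s T (fun t x y => Q t y x) p ->
  is_derive (fun u => fsum (fun x => p u x * ln (h u x))) t (log_h_flux Q p t).
Proof.
  intros Hs Ht [_ Hpd]. apply is_derive_fsum. intros x.
  apply (is_derive_mult (fun u => p u x) (fun u => ln (h u x))).
  - apply Hpd; auto.
  - apply is_derive_ln_comp; [apply hpos; lra | apply hback; lra].
  - intros; apply Rmult_comm.
Qed.

Lemma log_h_flux_cont_on (Q : R -> X -> X -> R) s p : 0 <= s <= T ->
  (forall x y, cont_on 0 T (fun t => Q t x y)) -> (forall x, cont_on s T (fun t => p t x)) ->
  cont_on s T (log_h_flux Q p).
Proof.
  intros Hs HQc Hpc.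
  assert (Hsub : forall f, cont_on 0 T f -> cont_on s T f)
    by (intros; apply (cont_on_sub 0 T); auto; lra).
  assert (HsT : s <= T) by lra.
  apply cont_on_fsum; auto. intros x. apply cont_on_plus; auto.
  - apply cont_on_mult, cont_on_ln; auto.
    + apply cont_on_fsum; auto. intros y. apply cont_on_mult; auto.
    + intros t Ht; apply hpos; lra.
  - apply cont_on_mult, cont_on_mult; auto.
    + apply cont_on_opp, cont_on_fsum; auto. intros y. apply cont_on_mult; auto.
      apply Hsub, (proj2 HQpre).
    + apply cont_on_inv; auto. intros t Ht. assert (0 < h t x) by (apply hpos; lra). lra.
Qed.

Lemma payoff_decomposition alpha (r : X -> R) (Q : R -> X -> X -> R) s p0 p :
  0 <= s <= T -> 0 < alpha -> (forall x, h T x = exp (r x / alpha)) ->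
  admissible T Qpre Q -> kolmogorov_forward Q s T p0 p -> ex_RInt (exp_kl Qpre Q p) s T ->
  ex_RInt (exp_kl Qh Q p) s T /\
  fsum (fun x => p T x * r x) - alpha * RInt (exp_kl Qpre Q p) s T =
  alpha * fsum (fun x => p0 x * ln (h s x)) - alpha * RInt (exp_kl Qh Q p) s T.
Proof.
  intros Hs Ha hT [[HQg HQc] Hac] Hkf Hex.
  assert (HsT : s <= T) by lra.
  pose proof (kolmogorov_forward_lin_sol Q s T p0 p HQg Hkf) as Hsol.
  assert (Hflux : cont_on s T (log_h_flux Q p))
    by (apply log_h_flux_cont_on; auto; apply Hsol).
  assert (Hfi : ex_RInt (log_h_flux Q p) s T) by (apply ex_RInt_cont_on; auto).
  assert (E : forall t, Rmin s T < t < Rmax s T ->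
              exp_kl Qh Q p t = minus (exp_kl Qpre Q p t) (log_h_flux Q p t)).
  { intros t Ht. rewrite Rmin_left, Rmax_right in Ht by lra.
    rewrite (exp_kl_htransform Q p t); [| lra | auto | intros x y; apply Hac; lra].
    change (exp_kl Qh Q p t = exp_kl Qh Q p t + log_h_flux Q p t - log_h_flux Q p t). ring. }
  assert (Hint : RInt (exp_kl Qh Q p) s T = RInt (exp_kl Qpre Q p) s T - RInt (log_h_flux Q p) s T).
  { rewrite (RInt_ext _ _ _ _ E), (RInt_minus (V := R_CompleteNormedModule)); auto. }
  assert (FTC : RInt (log_h_flux Q p) s T
                = fsum (fun x => p T x * ln (h T x)) - fsum (fun x => p s x * ln (h s x))).
  { apply (RInt_of_derive s T _ (fun u => fsum (fun x => p u x * ln (h u x)))); auto.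
    - apply cont_on_fsum; auto. intros x. apply cont_on_mult, cont_on_ln; auto.
      + apply Hsol.
      + apply (cont_on_sub 0 T); auto; lra.
      + intros t Ht; apply hpos; lra.
    - intros t Ht. apply (log_h_pairing_derive Q s); auto. lra. }
  split.
  - apply (ex_RInt_ext (fun t => minus (exp_kl Qpre Q p t) (log_h_flux Q p t))).
    + intros t Ht. symmetry. apply E, Ht.
    + apply (ex_RInt_minus (V := R_CompleteNormedModule)); auto.
  - rewrite Hint, FTC.
    rewrite (fsum_ext (fun x => p T x * ln (h T x)) (fun x => / alpha * (p T x * r x)))
      by (intros x; rewrite hT, ln_exp; field; lra).
    rewrite (fsum_ext (fun x => p s x * ln (h s x)) (fun x => p0 x * ln (h s x)))
      by (intros; rewrite (proj1 Hkf); auto).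
    rewrite fsum_scal. field. lra.
Qed.

End HTransform.

Lemma ln_ge_one_minus_inv a : 0 < a -> 1 - / a <= ln a.
Proof.
  intros Ha. pose proof (exp_ineq1_le (ln (/ a))) as H.
  rewrite exp_ln, ln_Rinv in H by (auto; apply Rinv_0_lt_compat; auto). lra.
Qed.

(* The KL integrand dominates the squared Hellinger distance: with [u = sqrt(a/b)],
   [a log(a/b) = 2 a log u >= 2 a (1 - 1/u)]. *)
Lemma hellinger_le_kl_term a b : 0 <= a -> 0 <= b -> (b = 0 -> a = 0) ->
  (sqrt a - sqrt b) * (sqrt a - sqrt b) <= b - a + xlogxy a b.
Proof.
  intros Ha Hb Hab. unfold xlogxy. destruct (Req_EM_T a 0) as [->|n].
  - rewrite sqrt_0. replace ((0 - sqrt b) * (0 - sqrt b)) with (sqrt b * sqrt b) by ring.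
    rewrite sqrt_sqrt; lra.
  - assert (Ha' : 0 < a) by lra.
    assert (Hb' : 0 < b) by (destruct Hb as [|<-]; auto; exfalso; apply n, Hab; auto).
    pose proof (sqrt_lt_R0 a Ha'); pose proof (sqrt_lt_R0 b Hb').
    pose proof (sqrt_sqrt a ltac:(lra)); pose proof (sqrt_sqrt b ltac:(lra)).
    set (u := sqrt a / sqrt b).
    assert (Hu : 0 < u) by (apply Rdiv_lt_0_compat; auto).
    assert (E : a / b = u * u).
    { replace (a / b) with ((sqrt a * sqrt a) / (sqrt b * sqrt b)) by (rewrite H1, H2; reflexivity).
      unfold u; field; lra. }
    rewrite E, ln_mult by auto.
    pose proof (ln_ge_one_minus_inv u Hu) as Hln.
    assert (Ea : a * (1 - / u) = a - sqrt a * sqrt b).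
    { unfold u. replace (a * (1 - / (sqrt a / sqrt b)))
        with (a - (sqrt a * sqrt a) * sqrt b / sqrt a) by (rewrite H1; field; lra).
      field; lra. }
    assert (a * (2 * (1 - / u)) <= a * (ln u + ln u)) by (apply Rmult_le_compat_l; lra).
    nra.
Qed.

Lemma sqrt_diff_sq_pos a b : 0 <= a -> 0 <= b -> a <> b ->
  0 < (sqrt a - sqrt b) * (sqrt a - sqrt b).
Proof.
  intros Ha Hb Hn.
  assert (sqrt a <> sqrt b) by (intros E; apply Hn; rewrite <- (sqrt_sqrt a), <- (sqrt_sqrt b), E; auto).
  apply (Rsqr_pos_lt (sqrt a - sqrt b)). lra.
Qed.

Section KLBounds.
Context {X : finite_type}.
Variables (Qr Q : R -> X -> X -> R) (t : R) (x : X).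
Hypotheses (HQ : forall y, y <> x -> 0 <= Q t x y) (HQr : forall y, y <> x -> 0 <= Qr t x y)
  (Hac : forall y, y <> x -> Qr t x y = 0 -> Q t x y = 0).

Lemma kl_rate_ge_hellinger y : y <> x ->
  (sqrt (Q t x y) - sqrt (Qr t x y)) * (sqrt (Q t x y) - sqrt (Qr t x y)) <= kl_rate Qr Q t x.
Proof.
  intros Hy. eapply Rle_trans; [apply hellinger_le_kl_term; auto|].
  apply (offdiag_ge_term x (fun z => Qr t x z - Q t x z + xlogxy (Q t x z) (Qr t x z))); auto.
  intros z Hz. eapply Rle_trans; [apply Rle_0_sqr | apply hellinger_le_kl_term; auto].
Qed.

Lemma kl_rate_nonneg : 0 <= kl_rate Qr Q t x.
Proof.
  apply offdiag_nonneg. intros z Hz.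
  eapply Rle_trans; [apply Rle_0_sqr | apply hellinger_le_kl_term; auto].
Qed.

End KLBounds.

Section Optimality.
Context {X : finite_type}.
Variables (T alpha : R) (r : X -> R) (x0 : X) (Qpre Qs : R -> X -> X -> R)
  (ppre ps : R -> X -> R) (h : R -> X -> R).
Hypotheses (HT : 0 < T) (Ha : 0 < alpha) (HQpre : regular_generator T Qpre)
  (Hadm : admissible T Qpre Qs)
  (Hkpre : kolmogorov_forward Qpre 0 T (dirac x0) ppre)
  (Hks : kolmogorov_forward Qs 0 T (dirac x0) ps)
  (Hfin : finite_cost T Qpre Qs ps)
  (Hmax : forall (Q : R -> X -> X -> R) (p : R -> X -> R),
      admissible T Qpre Q -> kolmogorov_forward Q 0 T (dirac x0) p -> finite_cost T Qpre Q p ->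
      objective T alpha r Qpre Q p <= objective T alpha r Qpre Qs ps)
  (hT : forall x, h T x = exp (r x / alpha))
  (hc : forall x, cont_on 0 T (fun t => h t x))
  (hback : forall t x, 0 < t < T ->
     is_derive (fun s => h s x) t (- fsum (fun y => Qpre t x y * h t y)))
  (hpos : forall t x, 0 <= t <= T -> 0 < h t x).

Local Notation Qh := (htransform T Qpre h).
Local Notation ph := (fun t x => ppre t x * h t x / h 0 x0).

Local Notation HT0 := (Rlt_le _ _ HT).

Lemma htransform_finite_cost : finite_cost T Qpre Qh ph.
Proof.
  pose proof (htransform_admissible T Qpre h HT0 HQpre hc hpos) as [[HQhg HQhc] HQhac].
  pose proof (htransform_forward T Qpre h HT0 HQpre hc hpos hback ppre x0 Hkpre) as Hkh.
  apply (ex_RInt_ext (log_h_flux Qpre h Qh ph)).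
  - intros t Ht. rewrite Rmin_left, Rmax_right in Ht by lra.
    rewrite (exp_kl_htransform T Qpre h HQpre hpos Qh ph t), exp_kl_self; [| lra | auto |].
    + symmetry. apply Rplus_0_l.
    + intros x y; apply HQhac; lra.
  - apply ex_RInt_cont_on; [lra|]. apply (log_h_flux_cont_on T); auto; [lra | apply Hkh].
Qed.

(* Optimality of [Qs], compared with [Qh] whose own cost relative to [Qh] vanishes. *)
Lemma optimal_kl_htransform :
  ex_RInt (exp_kl Qh Qs ps) 0 T /\ RInt (exp_kl Qh Qs ps) 0 T <= 0.
Proof.
  pose proof (htransform_admissible T Qpre h HT0 HQpre hc hpos) as Hhadm.
  pose proof (htransform_forward T Qpre h HT0 HQpre hc hpos hback ppre x0 Hkpre) as Hkh.
  destruct (payoff_decomposition T Qpre h HQpre hc hpos hback alpha r Qh 0 (dirac x0) ph)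
    as [_ Jh]; auto; [lra | apply htransform_finite_cost |].
  destruct (payoff_decomposition T Qpre h HQpre hc hpos hback alpha r Qs 0 (dirac x0) ps)
    as [Hint Js]; auto; [lra|].
  split; auto.
  specialize (Hmax Qh ph Hhadm Hkh htransform_finite_cost). unfold objective in Hmax.
  rewrite Jh, Js, (RInt_ext (exp_kl Qh Qh ph) (fun _ => 0)), RInt_const in Hmax
    by (intros; apply exp_kl_self).
  change (scal (T - 0) 0) with ((T - 0) * 0) in Hmax.
  destruct (Rle_dec (RInt (exp_kl Qh Qs ps) 0 T) 0) as [ok|ko]; auto.
  assert (0 < alpha * RInt (exp_kl Qh Qs ps) 0 T) by (apply Rmult_lt_0_compat; lra). lra.
Qed.

Lemma optimal_nonneg t x : 0 <= t <= T -> 0 <= ps t x.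
Proof.
  intros Ht. apply (kolmogorov_forward_nonneg Qs 0 T (dirac x0) ps); auto; try lra.
  - apply Hadm.
  - intros z. unfold dirac. destruct ft_eq_dec; lra.
Qed.

(* Otherwise the Hellinger lower bound makes the KL cost relative to [Qh] positive. *)
Lemma optimal_rates_eq_htransform t x y : 0 <= t <= T -> y <> x -> 0 < ps t x ->
  Qs t x y = Qh t x y.
Proof.
  intros Ht Hy Hp.
  destruct (Req_dec (Qs t x y) (Qh t x y)) as [e|ne]; auto. exfalso.
  destruct Hadm as [[HQsg HQsc] HQsac].
  pose proof (htransform_admissible T Qpre h HT0 HQpre hc hpos) as [[HQhg HQhc] _].
  destruct optimal_kl_htransform as [Hint Hneg].
  assert (Hhell : forall s z w, 0 <= s <= T -> w <> z ->
    (sqrt (Qs s z w) - sqrt (Qh s z w)) * (sqrt (Qs s z w) - sqrt (Qh s z w))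
    <= kl_rate Qh Qs s z).
  { intros s z w Hs Hw. apply kl_rate_ge_hellinger; auto.
    - intros v Hv. apply (proj1 HQsg); auto.
    - intros v Hv. apply (proj1 HQhg); auto.
    - intros v Hv Hz. apply HQsac; auto. apply (htransform_eq0 T Qpre h hpos); auto. }
  set (L := fun s => ps s x * ((sqrt (Qs s x y) - sqrt (Qh s x y)) * (sqrt (Qs s x y) - sqrt (Qh s x y)))).
  assert (HLc : cont_on 0 T L).
  { apply cont_on_mult; [lra | apply Hks |].
    apply cont_on_mult; [lra | |]; apply cont_on_minus; try lra; apply cont_on_sqrt; auto; lra. }
  assert (HLpos : 0 < RInt L 0 T).
  { apply (RInt_pos_of_pos_point 0 T L t); auto.
    - intros s Hs. apply Rmult_le_pos; [apply optimal_nonneg; auto | apply Rle_0_sqr].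
    - apply Rmult_lt_0_compat; auto. apply sqrt_diff_sq_pos; auto.
      + apply (proj1 HQsg); auto.
      + apply (proj1 HQhg); auto. }
  enough (RInt L 0 T <= RInt (exp_kl Qh Qs ps) 0 T) by lra.
  apply RInt_le; [lra | apply ex_RInt_cont_on; [lra | exact HLc] | exact Hint |].
  intros s Hs. assert (Hs' : 0 <= s <= T) by lra.
  eapply Rle_trans; [|apply (fsum_ge_term (fun z => ps s z * kl_rate Qh Qs s z) x)].
  - apply Rmult_le_compat_l; [apply optimal_nonneg; auto | apply Hhell; auto].
  - intros z. apply Rmult_le_pos; [apply optimal_nonneg; auto|].
    apply kl_rate_nonneg.
    + intros v Hv. apply (proj1 HQsg); auto.
    + intros v Hv. apply (proj1 HQhg); auto.
    + intros v Hv Hz. apply HQsac; auto. apply (htransform_eq0 T Qpre h hpos); auto.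
Qed.

Lemma forward_rhs_optimal_htransform t (q : X -> R) : 0 <= t <= T ->
  (forall z, 0 <= q z) -> (forall z, 0 < q z -> 0 < ps t z) ->
  forall x, fsum (fun y => Qs t y x * q y) = fsum (fun y => Qh t y x * q y).
Proof.
  intros Ht Hq Hqp. apply forward_rhs_transfer.
  - apply Hadm.
  - apply (htransform_admissible T Qpre h HT0 HQpre hc hpos).
  - intros z w Hw. destruct (Hq z) as [Hz|<-]; [|ring].
    rewrite optimal_rates_eq_htransform; auto.
Qed.

Lemma optimal_marginal_htransform t x : 0 <= t <= T -> ps t x = ph t x.
Proof.
  pose proof (htransform_admissible T Qpre h HT0 HQpre hc hpos) as [[HQhg HQhc] _].
  pose proof (htransform_forward T Qpre h HT0 HQpre hc hpos hback ppre x0 Hkpre) as Hkh.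
  revert t x. apply (lin_sol_unique 0 T (fun t x y => Qh t y x)); [lra | auto | | | |].
  - intros t x y Ht Hxy. apply (proj1 HQhg); auto.
  - destruct (kolmogorov_forward_lin_sol Qs 0 T (dirac x0) ps (proj1 (proj1 Hadm)) Hks)
      as [Hc Hd].
    split; auto. intros t x Ht.
    rewrite <- forward_rhs_optimal_htransform; [auto | lra | | auto].
    intros; apply optimal_nonneg; lra.
  - apply (kolmogorov_forward_lin_sol Qh 0 T (dirac x0) ph HQhg Hkh).
  - intros x. rewrite (proj1 Hks), (proj1 Hkh). reflexivity.
Qed.

Lemma value_fn_log_h (K : R -> X -> R -> X -> R) t x : 0 <= t <= T ->
  (forall y, kolmogorov_forward Qs t T (dirac y) (K t y)) ->
  ex_RInt (exp_kl Qpre Qs (K t x)) t T -> 0 < ps t x ->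
  value_fn T alpha r Qpre Qs K t x = alpha * ln (h t x).
Proof.
  intros Ht HK HKi Hp.
  pose proof (htransform_admissible T Qpre h HT0 HQpre hc hpos) as Hhadm.
  pose proof Hhadm as [[HQhg HQhc] HQhac].
  assert (Kpos : forall s z, t <= s <= T -> 0 <= K t x s z).
  { apply (kolmogorov_forward_nonneg Qs t T (dirac x)); auto; try lra; try apply Hadm.
    intros w. unfold dirac. destruct ft_eq_dec; lra. }
  assert (Kpp : forall s z, t <= s <= T -> 0 < K t x s z -> 0 < ps s z).
  { intros s z Hs Hk. rewrite (chapman_kolmogorov Qs T t (dirac x0) ps (K t)); auto;
      try apply Hadm.
    eapply Rlt_le_trans; [|apply (fsum_ge_term (fun y => ps t y * K t y s z) x)].
    - apply Rmult_lt_0_compat; auto.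
    - intros y. apply Rmult_le_pos; [apply optimal_nonneg; auto|].
      apply (kolmogorov_forward_nonneg Qs t T (dirac y)); auto; try lra; try apply Hadm.
      intros w. unfold dirac. destruct ft_eq_dec; lra. }
  assert (HKh : kolmogorov_forward Qh t T (dirac x) (K t x)).
  { apply lin_sol_kolmogorov_forward; auto; [apply (HK x)|].
    destruct (kolmogorov_forward_lin_sol Qs t T _ _ (proj1 (proj1 Hadm)) (HK x)) as [Hc Hd].
    split; auto. intros s z Hs.
    rewrite <- forward_rhs_optimal_htransform; auto; [lra | |].
    - intros; apply Kpos; lra.
    - intros w Hw. apply Kpp; auto; lra. }
  assert (EK : forall s, t <= s <= T -> exp_kl Qpre Qs (K t x) s = exp_kl Qpre Qh (K t x) s).
  { intros s Hs. apply fsum_ext. intros z.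
    destruct (Kpos s z Hs) as [Hk|<-]; [|ring].
    f_equal. apply offdiag_ext. intros w Hw.
    rewrite (optimal_rates_eq_htransform s z w); auto; lra. }
  assert (EKi : RInt (exp_kl Qpre Qs (K t x)) t T = RInt (exp_kl Qpre Qh (K t x)) t T).
  { apply RInt_ext. intros s Hs. rewrite Rmin_left, Rmax_right in Hs by lra. apply EK; lra. }
  destruct (payoff_decomposition T Qpre h HQpre hc hpos hback alpha r Qh t (dirac x) (K t x))
    as [_ J]; auto.
  { apply (ex_RInt_ext (exp_kl Qpre Qs (K t x))); auto.
    intros s Hs. rewrite Rmin_left, Rmax_right in Hs by lra. apply EK; lra. }
  rewrite (RInt_ext (exp_kl Qh Qh (K t x)) (fun _ => 0)), RInt_const, fsum_dirac_l in J
    by (intros; apply exp_kl_self).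
  change (scal (T - t) 0) with ((T - t) * 0) in J.
  unfold value_fn. rewrite EKi, J. ring.
Qed.

End Optimality.

Theorem theorem4 (X : finite_type) (T alpha : R) (r : X -> R) (x0 : X)
  (Qpre Qs : R -> X -> X -> R) (ppre ps : R -> X -> R)
  (K : R -> X -> R -> X -> R) :
  0 < T -> 0 < alpha ->
  regular_generator T Qpre ->
  admissible T Qpre Qs ->
  kolmogorov_forward Qpre 0 T (dirac x0) ppre ->
  kolmogorov_forward Qs 0 T (dirac x0) ps ->
  finite_cost T Qpre Qs ps ->
  (forall (Q : R -> X -> X -> R) (p : R -> X -> R),
      admissible T Qpre Q ->
      kolmogorov_forward Q 0 T (dirac x0) p ->
      finite_cost T Qpre Q p ->
      objective T alpha r Qpre Q p <= objective T alpha r Qpre Qs ps) ->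
  (forall t x, 0 <= t <= T -> kolmogorov_forward Qs t T (dirac x) (K t x)) ->
  (forall t x, 0 <= t <= T -> ex_RInt (exp_kl Qpre Qs (K t x)) t T) ->
  (forall t, 0 <= t <= T ->
     exists c, 0 < c /\
       forall x, ps t x = c * (exp (value_fn T alpha r Qpre Qs K t x / alpha) * ppre t x))
  /\
  (exists c, 0 < c /\ forall x, ps T x = c * (exp (r x / alpha) * ppre T x)).
Proof.
  intros HT Ha HQpre Hadm Hkpre Hks Hfin Hmax HK HKi.
  destruct (kolmogorov_backward_exists T Qpre (fun x => exp (r x / alpha)) ltac:(lra) HQpre
              (fun x => exp_pos _)) as [h [hT [hc [hback hpos]]]].
  assert (Hps : forall t x, 0 <= t <= T -> ps t x = ppre t x * h t x / h 0 x0)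
    by (apply (optimal_marginal_htransform T alpha r x0 Qpre Qs ppre ps h); auto).
  assert (HV : forall t x, 0 <= t <= T -> 0 < ps t x ->
                 value_fn T alpha r Qpre Qs K t x = alpha * ln (h t x))
    by (intros; apply (value_fn_log_h T alpha r x0 Qpre Qs ppre ps h); auto).
  assert (Hc : 0 < / h 0 x0) by (apply Rinv_0_lt_compat, hpos; lra).
  split; [intros t Ht|]; exists (/ h 0 x0); split; auto; intros x.
  - destruct (optimal_nonneg T x0 Qpre Qs ps HT Hadm Hks t x Ht) as [Hpos|Hzero].
    + rewrite HV, Hps by auto.
      replace (alpha * ln (h t x) / alpha) with (ln (h t x)) by (field; lra).
      rewrite exp_ln by auto. unfold Rdiv. ring.
    + pose proof (hpos t x Ht). pose proof (hpos 0 x0 ltac:(lra)).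
      replace (ppre t x) with (ps t x * h 0 x0 / h t x) by (rewrite Hps by auto; field; lra).
      rewrite <- Hzero. unfold Rdiv. ring.
  - rewrite Hps, hT by lra. unfold Rdiv. ring.
Qed.
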